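(* Let $m\in\mathbb N$ and let $f:\mathbb R\to\mathbb R$ be a $2\pi$-periodic function of class $C^m$ with zero mean, $\int_0^{2\pi} f(t)\,dt=0$. Then: (a) $\displaystyle 0\le \sum_{k=0}^{m}\mathbf c_{m,k}\int_0^{2\pi} \big(f^{(k)}(t)\big)^2\,dt$, where $\mathbf c_{m,k}$ are the coefficients of the polynomial $Q_m(t):=\prod_{j=1}^{m}(t-j^2)=\sum_{k=0}^{m}\mathbf c_{m,k}t^k$. (b) $\displaystyle 0\le \sum_{k=0}^{m-1}\lambda_{m,k}\int_0^{2\pi}\Big[\big(f^{(k+1)}(t)\big)^2-\big(f^{(k)}(t)\big)^2\Big]dt$, where $\lambda_{m,k}$ are the coefficients of the polynomial $P_m(t)=\sum_{k=0}^{m-1}\lambda_{m,k}t^k$ defined by $P_1(t)=1$ and $P_m(t):=\prod_{j=2}^{m}(t-j^2)$ for $m\ge 2$. (c) If $m\ge 2$, $$0\le \prod_{j=2}^{m}(1-j^2)\int_0^{2\pi}\big[\dot f(t)^2-f(t)^2\big]dt+\sum_{k=1}^{m-1}S_{m,k}\int_0^{2\pi}\big(f^{(k+1)}(t)+f^{(k-1)}(t)\big)^2dt,$$ where $S_{m,1},\dots,S_{m,m-1}$ are the coefficients of the polynomial $\mathcal S_m(t):=\frac{P_m(t)-P_m(1)}{t-1}=\sum_{k=1}^{m-1}S_{m,k}t^{k-1}$. The inequalities in (a), (b), (c) are equivalent, and equality holds in them if and only if $f(t)=\sum_{n=1}^{m}\big(\alpha_n\cos(nt)+\beta_n\sin(nt)\big)$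 for some real constants $\alpha_n,\beta_n$.
   Context: $f^{(k)}$ denotes the $k$-th derivative of $f$; $\dot f=f'$. *)

From Stdlib Require Import Reals.
From Coquelicot Require Import Coquelicot.
From mathcomp Require Import all_boot all_order all_algebra.
From mathcomp Require Import Rstruct.

Import GRing.Theory Num.Theory.

Definition Qpoly (m : nat) : {poly R} :=
  (\prod_(1 <= j < m.+1) ('X - ((j * j)%N%:R)%:P))%R.
Definition cQ (m k : nat) : R := ((Qpoly m)`_k)%R.

(** P_m(t) = prod_{j=2}^m (t - j^2)  (empty product = 1, so P_1 = 1). *)
Definition Ppoly (m : nat) : {poly R} :=
  (\prod_(2 <= j < m.+1) ('X - ((j * j)%N%:R)%:P))%R.
Definition lam (m k : nat) : R := ((Ppoly m)`_k)%R.

(** S_m(t) = (P_m(t) - P_m(1)) / (t - 1)  (exact polynomial division). *)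
Definition Spoly (m : nat) : {poly R} :=
  ((Ppoly m - ((Ppoly m).[1])%:P) %/ ('X - 1))%R.
Definition Scoef (m k : nat) : R := ((Spoly m)`_(k.-1))%R.

Definition prod_1_minus_sq (m : nat) : R :=
  (\prod_(2 <= j < m.+1) (1 - (j * j)%N%:R))%R.

Definition Cm (m : nat) (f : R -> R) : Prop :=
  (forall k x, (k < m)%nat -> ex_derive (Derive_n f k) x) /\
  (forall k x, (k <= m)%nat -> continuous (Derive_n f k) x).

Open Scope R_scope.

Definition trig_poly_1_m (m : nat) (f : R -> R) : Prop :=
  exists a b : nat -> R, forall t,
    f t = sum_n_m (fun n => a n * cos (INR n * t) + b n * sin (INR n * t)) 1 m.

Definition quantA (m : nat) (f : R -> R) : R :=
  sum_n_m (fun k => cQ m k * RInt (fun t => (Derive_n f k t) ^ 2) 0 (2 * PI)) 0 m.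

Definition quantB (m : nat) (f : R -> R) : R :=
  sum_n_m (fun k => lam m k *
    RInt (fun t => (Derive_n f (S k) t) ^ 2 - (Derive_n f k t) ^ 2) 0 (2 * PI))
    0 (m - 1).

Definition quantC (m : nat) (f : R -> R) : R :=
  prod_1_minus_sq m * RInt (fun t => (Derive f t) ^ 2 - (f t) ^ 2) 0 (2 * PI)
  + sum_n_m (fun k => Scoef m k *
      RInt (fun t => (Derive_n f (S k) t + Derive_n f (k - 1) t) ^ 2) 0 (2 * PI))
      1 (m - 1).

(* Write [w_n] for the energy [a_n^2 + b_n^2] of the [n]-th Fourier mode of [f].  Integration by
   parts gives [w_n(f^(k)) = n^(2k) w_n(f)], and Parseval's identity, proved for C^1 periodic
   functions from the uniform convergence of their Fourier series and the uniqueness theorem, gives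
   [||f^(k)||^2 = pi sum_n n^(2k) w_n] for [k < m]; for [k = m] only Bessel's inequality is
   available, which suffices because [Q_m] is monic.  Hence
   [sum_k c_(m,k) ||f^(k)||^2 >= pi sum_(n <= N) Q_m(n^2) w_n + o(1)], and [Q_m(n^2)] vanishes for
   [n <= m] and is positive for [n > m]: the form is nonnegative and vanishes exactly when [w_n = 0]
   for all [n > m], i.e. when [f] is a trigonometric polynomial of degree at most [m].
   The quantities of (b) and (c) equal the one of (a): the factorisations [Q_m = (t - 1) P_m] and
   [P_m = (t - 1) S_m + P_m(1)] become summations by parts, and integrating by parts
   [||f^(k+1) + f^(k-1)||^2 = ||f^(k+1)||^2 - 2 ||f^(k)||^2 + ||f^(k-1)||^2]. *)

From Stdlib Require Import Reals Lra Lia ZArith.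
From Coquelicot Require Import Coquelicot.
From mathcomp Require ssreflect ssrfun ssrbool eqtype ssrnat seq fintype bigop.
From mathcomp Require ssralg poly polydiv ssrnum Rstruct.
Open Scope R_scope.

Lemma continuity_of_ex_derive (f : R -> R) : (forall x, ex_derive f x) -> continuity f.
Proof.
  intros H x. apply continuity_pt_filterlim.
  apply (@ex_derive_continuous R_AbsRing R_NormedModule), H.
Qed.

Lemma continuity_of_is_derive (f f' : R -> R) : (forall x, is_derive f x (f' x)) -> continuity f.
Proof. intros H. apply continuity_of_ex_derive. intros x. eexists. apply H. Qed.

Lemma continuity_ext (f g : R -> R) : (forall x, f x = g x) -> continuity f -> continuity g.
Proof. intros E H x. apply (continuity_pt_locally_ext f g 1); auto; lra. Qed.

(* Coquelicot states its sum and integral lemmas in an abstract [AbelianMonoid] or [NormedModule]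
   whose carrier is only convertible to [R]; the variants below are stated with [:> R] so that
   [ring] and [lra] apply to their instances. *)
Lemma sum_n_m_fun_ext_loc (a b : nat -> R) n m :
  (forall k, (n <= k <= m)%nat -> a k = b k) -> sum_n_m a n m = sum_n_m b n m :> R.
Proof. apply sum_n_m_ext_loc. Qed.

Lemma sum_n_m_fun_ext (a b : nat -> R) n m :
  (forall k, a k = b k) -> sum_n_m a n m = sum_n_m b n m :> R.
Proof. intros E. apply sum_n_m_ext, E. Qed.

Lemma sum_n_m_R0 n m : sum_n_m (fun _ => 0) n m = 0 :> R.
Proof. apply (@sum_n_m_const_zero R_AbelianMonoid). Qed.

Lemma sum_n_m_Sm (a : nat -> R) n m : (n <= S m)%nat ->
  sum_n_m a n (S m) = sum_n_m a n m + a (S m) :> R.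
Proof. intros H. now rewrite sum_n_Sm. Qed.

Lemma sum_n_m_empty (a : nat -> R) n m : (m < n)%nat -> sum_n_m a n m = 0 :> R.
Proof. intros H. now rewrite sum_n_m_zero. Qed.

Lemma sum_n_m_add (a b : nat -> R) n m :
  sum_n_m (fun k => a k + b k) n m = sum_n_m a n m + sum_n_m b n m :> R.
Proof. exact (@sum_n_m_plus R_AbelianMonoid a b n m). Qed.

Lemma sum_n_m_Rmult_l c (a : nat -> R) n m :
  sum_n_m (fun k => c * a k) n m = c * sum_n_m a n m :> R.
Proof. exact (@sum_n_m_mult_l R_Ring c a n m). Qed.

Lemma sum_n_m_Rmult_r c (a : nat -> R) n m :
  sum_n_m (fun k => a k * c) n m = sum_n_m a n m * c :> R.
Proof. rewrite Rmult_comm, <- sum_n_m_Rmult_l. apply sum_n_m_fun_ext. intros; apply Rmult_comm. Qed.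

Lemma sum_n_m_ge0 (a : nat -> R) n m :
  (forall k, (n <= k <= m)%nat -> 0 <= a k) -> 0 <= sum_n_m a n m.
Proof.
  intros H. destruct (le_lt_dec n m) as [Hnm | Hnm].
  - induction Hnm as [| m Hnm IH].
    + rewrite sum_n_n. apply H. lia.
    + rewrite sum_n_m_Sm by lia. assert (0 <= a (S m)) by (apply H; lia).
      assert (0 <= sum_n_m a n m) by (apply IH; intros; apply H; lia). lra.
  - rewrite sum_n_m_empty by lia. lra.
Qed.

Lemma sum_n_m_le_loc (a b : nat -> R) n m :
  (forall k, (n <= k <= m)%nat -> a k <= b k) -> sum_n_m a n m <= sum_n_m b n m.
Proof.
  intros H.
  assert (Hdiff : 0 <= sum_n_m (fun k => b k + -1 * a k) n m).
  { apply sum_n_m_ge0. intros k Hk. specialize (H k Hk). lra. }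
  rewrite sum_n_m_add, sum_n_m_Rmult_l in Hdiff. lra.
Qed.

Lemma Rabs_sum_n_m_le (a : nat -> R) n m :
  Rabs (sum_n_m a n m) <= sum_n_m (fun k => Rabs (a k)) n m.
Proof. exact (@norm_sum_n_m R_AbsRing R_NormedModule a n m). Qed.

Lemma sum_n_m_ge_term (a : nat -> R) n m k :
  (forall j, (n <= j <= m)%nat -> 0 <= a j) -> (n <= k <= m)%nat -> a k <= sum_n_m a n m.
Proof.
  intros H Hk. rewrite (sum_n_m_Chasles a n k m) by lia. change plus with Rplus.
  assert (0 <= sum_n_m a (S k) m) by (apply sum_n_m_ge0; intros; apply H; lia).
  destruct (Nat.eq_dec k n) as [-> | Hkn].
  - rewrite sum_n_n. lra.
  - replace k with (S (k - 1)) at 2 by lia. rewrite sum_n_m_Sm by lia.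
    replace (S (k - 1)) with k by lia.
    assert (0 <= sum_n_m a n (k - 1)) by (apply sum_n_m_ge0; intros; apply H; lia). lra.
Qed.

Lemma sum_n_m_swap (G : nat -> nat -> R) p q n m :
  sum_n_m (fun k => sum_n_m (G k) n m) p q = sum_n_m (fun j => sum_n_m (fun k => G k j) p q) n m :> R.
Proof.
  destruct (le_lt_dec p q) as [Hpq | Hpq].
  - induction Hpq as [| q Hpq IH].
    + rewrite sum_n_n. apply sum_n_m_ext. intros; now rewrite sum_n_n.
    + rewrite sum_n_m_Sm, IH by lia. rewrite <- sum_n_m_add.
      apply sum_n_m_ext. intros; now rewrite sum_n_m_Sm by lia.
  - rewrite sum_n_m_empty by lia.
    rewrite (sum_n_m_ext _ (fun _ => 0)).
    + now rewrite sum_n_m_R0.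
    + intros j. now rewrite sum_n_m_empty by lia.
Qed.

(* Coefficientwise forms of multiplication by [t - 1]. *)
Lemma sum_n_m_abel (c lam I : nat -> R) n : (1 <= n)%nat ->
  c 0%nat = - lam 0%nat -> (forall k, c (S k) = lam k - lam (S k)) ->
  sum_n_m (fun k => c k * I k) 0 n =
  sum_n_m (fun k => lam k * (I (S k) - I k)) 0 (n - 1) - lam n * I n :> R.
Proof.
  intros Hn H0 HS. destruct n as [| n]; [lia |]. replace (S n - 1)%nat with n by lia. clear Hn.
  induction n as [| n IH].
  - rewrite sum_n_m_Sm, !sum_n_n, H0, HS by lia. ring.
  - rewrite sum_n_m_Sm, IH, sum_n_m_Sm, HS by lia. ring.
Qed.

Lemma sum_n_m_abel_1 (lam s J : nat -> R) p n :
  lam 0%nat = p - s 1%nat -> (forall k, lam (S k) = s (S k) - s (S (S k))) ->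
  sum_n_m (fun k => lam k * J k) 0 n =
  p * J 0%nat + sum_n_m (fun k => s k * (J k - J (k - 1)%nat)) 1 n - s (S n) * J n :> R.
Proof.
  intros H0 HS. induction n as [| n IH].
  - rewrite sum_n_n, sum_n_m_empty, H0 by lia. ring.
  - rewrite sum_n_m_Sm, IH, sum_n_m_Sm, HS by lia. replace (S n - 1)%nat with n by lia. ring.
Qed.

Lemma continuity_sum_n_m (F : nat -> R -> R) n m :
  (forall k, continuity (F k)) -> continuity (fun x => sum_n_m (fun k => F k x) n m).
Proof.
  intros H. destruct (le_lt_dec n m) as [Hnm | Hnm].
  - induction Hnm as [| m Hnm IH].
    + apply continuity_ext with (F n); auto. intros; now rewrite sum_n_n.
    + apply continuity_ext with (fun x => sum_n_m (fun k => F k x) n m + F (S m) x).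
      * intros; now rewrite sum_n_m_Sm by lia.
      * now apply continuity_plus.
  - apply continuity_ext with (fun _ => 0).
    + intros; now rewrite sum_n_m_empty.
    + apply continuity_const. now intros ? ?.
Qed.

Lemma is_lim_seq_sum_n_m (u : nat -> nat -> R) (l : nat -> R) n m :
  (forall k, (n <= k <= m)%nat -> is_lim_seq (u k) (l k)) ->
  is_lim_seq (fun N => sum_n_m (fun k => u k N) n m) (sum_n_m l n m).
Proof.
  intros H. destruct (le_lt_dec n m) as [Hnm | Hnm].
  - induction Hnm as [| m Hnm IH].
    + rewrite sum_n_n. apply (is_lim_seq_ext (u n)). intros; now rewrite sum_n_n.
      apply H; lia.
    + rewrite sum_n_m_Sm by lia.
      apply (is_lim_seq_ext (fun N => sum_n_m (fun k => u k N) n m + u (S m) N)).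
      intros; now rewrite sum_n_m_Sm by lia.
      apply is_lim_seq_plus'. apply IH; intros; apply H; lia. apply H; lia.
  - rewrite sum_n_m_empty by lia.
    apply (is_lim_seq_ext (fun _ => 0)). intros; now rewrite sum_n_m_empty.
    apply is_lim_seq_const.
Qed.

Lemma RInt_fun_ext (f g : R -> R) a b : (forall x, f x = g x) -> RInt f a b = RInt g a b :> R.
Proof. intros E. apply RInt_ext. intros x _. apply E. Qed.

Section ContinuousIntegrals.
Variables (a b : R).

Lemma ex_RInt_continuity (f : R -> R) : continuity f -> ex_RInt f a b.
Proof.
  intros H. apply (@ex_RInt_continuous R_CompleteNormedModule).
  intros z _. apply continuity_pt_filterlim, H.
Qed.

Lemma RInt_plus_continuity (f g : R -> R) : continuity f -> continuity g ->
  RInt (fun x => f x + g x) a b = RInt f a b + RInt g a b :> R.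
Proof. intros. apply (RInt_plus f g); now apply ex_RInt_continuity. Qed.

Lemma RInt_minus_continuity (f g : R -> R) : continuity f -> continuity g ->
  RInt (fun x => f x - g x) a b = RInt f a b - RInt g a b :> R.
Proof. intros. apply (RInt_minus f g); now apply ex_RInt_continuity. Qed.

Lemma RInt_scal_continuity (c : R) (f : R -> R) : continuity f ->
  RInt (fun x => c * f x) a b = c * RInt f a b :> R.
Proof. intros. apply (RInt_scal f a b c). now apply ex_RInt_continuity. Qed.

Lemma RInt_const_R (c : R) : RInt (fun _ => c) a b = (b - a) * c :> R.
Proof. apply (RInt_const a b c). Qed.

Lemma RInt_le_continuity (f g : R -> R) : a <= b -> continuity f -> continuity g ->
  (forall x, a < x < b -> f x <= g x) -> RInt f a b <= RInt g a b.
Proof. intros. apply RInt_le; auto; now apply ex_RInt_continuity. Qed.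

Lemma RInt_ge0_continuity (f : R -> R) : a <= b -> continuity f ->
  (forall x, a < x < b -> 0 <= f x) -> 0 <= RInt f a b.
Proof. intros. apply RInt_ge_0; auto. now apply ex_RInt_continuity. Qed.

Lemma RInt_derive_continuity (F f : R -> R) :
  (forall x, is_derive F x (f x)) -> continuity f -> RInt f a b = F b - F a :> R.
Proof.
  intros HF Hf. apply is_RInt_unique, (is_RInt_derive F f); intros x _; auto.
  apply continuity_pt_filterlim, Hf.
Qed.

Lemma RInt_by_parts (u u' v v' : R -> R) :
  (forall x, is_derive u x (u' x)) -> (forall x, is_derive v x (v' x)) ->
  continuity u' -> continuity v' ->
  RInt (fun x => u' x * v x) a b = u b * v b - u a * v a - RInt (fun x => u x * v' x) a b :> R.
Proof.
  intros Hu Hv Cu' Cv'.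
  assert (Cu := continuity_of_is_derive u u' Hu).
  assert (Cv := continuity_of_is_derive v v' Hv).
  assert (E : RInt (fun x => u' x * v x + u x * v' x) a b = u b * v b - u a * v a).
  { apply (RInt_derive_continuity (fun x => u x * v x)); [| reg].
    intros x. apply (is_derive_mult u v); auto. intros; apply Rmult_comm. }
  rewrite RInt_plus_continuity in E by reg. lra.
Qed.

End ContinuousIntegrals.

Lemma RInt_sum_n_m_continuity (F : nat -> R -> R) p q a b : (forall n, continuity (F n)) ->
  RInt (fun x => sum_n_m (fun n => F n x) p q) a b = sum_n_m (fun n => RInt (F n) a b) p q :> R.
Proof.
  intros H. destruct (le_lt_dec p q) as [Hpq | Hpq].
  - induction Hpq as [| q Hpq IH].
    + rewrite sum_n_n. apply RInt_fun_ext. intros; now rewrite sum_n_n.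
    + rewrite (RInt_fun_ext _ (fun x => sum_n_m (fun n => F n x) p q + F (S q) x)).
      * rewrite RInt_plus_continuity, IH, sum_n_m_Sm by (lia || auto using continuity_sum_n_m).
        reflexivity.
      * intros; now rewrite sum_n_m_Sm by lia.
  - rewrite sum_n_m_empty by lia.
    rewrite (RInt_fun_ext _ (fun _ => 0)), RInt_const_R by (intros; now rewrite sum_n_m_empty).
    ring.
Qed.

(** * Fourier coefficients and Bessel's inequality *)

Lemma sin_IZR_2PI (z : Z) : sin (IZR z * (2 * PI)) = 0.
Proof. apply sin_eq_0_1. exists (2 * z)%Z. rewrite mult_IZR. simpl. ring. Qed.

Lemma cos_IZR_2PI (z : Z) : cos (IZR z * (2 * PI)) = 1.
Proof.
  replace (IZR z * (2 * PI)) with (2 * (IZR z * PI)) by ring.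
  rewrite cos_2a_sin, sin_eq_0_1 by now exists z. ring.
Qed.

Lemma RInt_cos_IZR (z : Z) :
  RInt (fun x => cos (IZR z * x)) 0 (2 * PI) = (if Z.eq_dec z 0 then 2 * PI else 0) :> R.
Proof.
  destruct (Z.eq_dec z 0) as [-> | Hz].
  - rewrite (RInt_fun_ext _ (fun _ => 1)), RInt_const_R by (intros; now rewrite Rmult_0_l, cos_0).
    ring.
  - assert (Hz' : IZR z <> 0) by now apply not_0_IZR.
    rewrite (RInt_derive_continuity _ _ (fun x => sin (IZR z * x) / IZR z)) by
      (reg || (intros x; auto_derive; [auto | field; auto])).
    rewrite sin_IZR_2PI, Rmult_0_r, sin_0. field; auto.
Qed.

Lemma RInt_sin_IZR (z : Z) : RInt (fun x => sin (IZR z * x)) 0 (2 * PI) = 0 :> R.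
Proof.
  destruct (Z.eq_dec z 0) as [-> | Hz].
  - rewrite (RInt_fun_ext _ (fun _ => 0)), RInt_const_R by (intros; now rewrite Rmult_0_l, sin_0).
    ring.
  - assert (Hz' : IZR z <> 0) by now apply not_0_IZR.
    rewrite (RInt_derive_continuity _ _ (fun x => - cos (IZR z * x) / IZR z)) by
      (reg || (intros x; auto_derive; [auto | field; auto])).
    rewrite cos_IZR_2PI, Rmult_0_r, cos_0. field; auto.
Qed.

Lemma INR_minus_IZR n k : INR n - INR k = IZR (Z.of_nat n - Z.of_nat k).
Proof. now rewrite minus_IZR, <- !INR_IZR_INZ. Qed.

Lemma INR_plus_IZR n k : INR n + INR k = IZR (Z.of_nat n + Z.of_nat k).
Proof. now rewrite plus_IZR, <- !INR_IZR_INZ. Qed.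

Lemma RInt_cos_cos n k :
  RInt (fun x => cos (INR n * x) * cos (INR k * x)) 0 (2 * PI) =
  (if Nat.eq_dec n k then (if Nat.eq_dec n 0 then 2 * PI else PI) else 0) :> R.
Proof.
  rewrite (RInt_fun_ext _ (fun x => /2 * cos (IZR (Z.of_nat n - Z.of_nat k) * x)
                               + /2 * cos (IZR (Z.of_nat n + Z.of_nat k) * x))).
  - rewrite RInt_plus_continuity, !RInt_scal_continuity, !RInt_cos_IZR by reg.
    destruct (Z.eq_dec _ 0), (Z.eq_dec _ 0), (Nat.eq_dec n k), (Nat.eq_dec n 0); lia || lra.
  - intros x. rewrite <- INR_minus_IZR, <- INR_plus_IZR, Rmult_minus_distr_r, Rmult_plus_distr_r.
    rewrite cos_minus, cos_plus. field.
Qed.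

Lemma RInt_sin_sin n k :
  RInt (fun x => sin (INR n * x) * sin (INR k * x)) 0 (2 * PI) =
  (if Nat.eq_dec n k then (if Nat.eq_dec n 0 then 0 else PI) else 0) :> R.
Proof.
  rewrite (RInt_fun_ext _ (fun x => /2 * cos (IZR (Z.of_nat n - Z.of_nat k) * x)
                               + - /2 * cos (IZR (Z.of_nat n + Z.of_nat k) * x))).
  - rewrite RInt_plus_continuity, !RInt_scal_continuity, !RInt_cos_IZR by reg.
    destruct (Z.eq_dec _ 0), (Z.eq_dec _ 0), (Nat.eq_dec n k), (Nat.eq_dec n 0); lia || lra.
  - intros x. rewrite <- INR_minus_IZR, <- INR_plus_IZR, Rmult_minus_distr_r, Rmult_plus_distr_r.
    rewrite cos_minus, cos_plus. field.
Qed.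

Lemma RInt_sin_cos n k : RInt (fun x => sin (INR n * x) * cos (INR k * x)) 0 (2 * PI) = 0 :> R.
Proof.
  rewrite (RInt_fun_ext _ (fun x => /2 * sin (IZR (Z.of_nat n - Z.of_nat k) * x)
                               + /2 * sin (IZR (Z.of_nat n + Z.of_nat k) * x))).
  - rewrite RInt_plus_continuity, !RInt_scal_continuity, !RInt_sin_IZR by reg. ring.
  - intros x. rewrite <- INR_minus_IZR, <- INR_plus_IZR, Rmult_minus_distr_r, Rmult_plus_distr_r.
    rewrite sin_minus, sin_plus. field.
Qed.

(* [fourier_cos h n] and [fourier_sin h n] are [PI] times the classical Fourier coefficients. *)
Definition fourier_cos (h : R -> R) (n : nat) : R :=
  RInt (fun t => h t * cos (INR n * t)) 0 (2 * PI).

Definition fourier_sin (h : R -> R) (n : nat) : R :=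
  RInt (fun t => h t * sin (INR n * t)) 0 (2 * PI).

Definition fourier_energy (h : R -> R) (n : nat) : R :=
  fourier_cos h n ^ 2 + fourier_sin h n ^ 2.

Definition trig_sum (a b : nat -> R) (N : nat) (x : R) : R :=
  sum_n_m (fun n => a n * cos (INR n * x) + b n * sin (INR n * x)) 1 N.

Definition fourier_sum (h : R -> R) (N : nat) : R -> R :=
  trig_sum (fun n => fourier_cos h n / PI) (fun n => fourier_sin h n / PI) N.

Lemma fourier_energy_ge0 h n : 0 <= fourier_energy h n.
Proof.
  unfold fourier_energy. pose proof (pow2_ge_0 (fourier_cos h n)).
  pose proof (pow2_ge_0 (fourier_sin h n)). lra.
Qed.

Lemma fourier_cos_0 h : fourier_cos h 0 = RInt h 0 (2 * PI).
Proof. apply RInt_fun_ext. intros x. now rewrite Rmult_0_l, cos_0, Rmult_1_r. Qed.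

Lemma fourier_sin_0 h : fourier_sin h 0 = 0.
Proof.
  unfold fourier_sin. rewrite (RInt_fun_ext _ (fun _ => 0)), RInt_const_R by
    (intros; now rewrite Rmult_0_l, sin_0, Rmult_0_r).
  ring.
Qed.

Lemma continuity_trig_sum a b N : continuity (trig_sum a b N).
Proof. apply continuity_sum_n_m. intros n. reg. Qed.

Lemma continuity_fourier_sum h N : continuity (fourier_sum h N).
Proof. apply continuity_trig_sum. Qed.

Lemma trig_sum_periodic a b N t : trig_sum a b N (t + 2 * PI) = trig_sum a b N t.
Proof.
  apply sum_n_m_fun_ext. intros n.
  replace (INR n * (t + 2 * PI)) with (INR n * t + 2 * INR n * PI) by ring.
  now rewrite cos_period, sin_period.
Qed.

Lemma RInt_mul_trig_sum g a b N : continuity g ->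
  RInt (fun x => g x * trig_sum a b N x) 0 (2 * PI) =
  sum_n_m (fun n => a n * fourier_cos g n + b n * fourier_sin g n) 1 N :> R.
Proof.
  intros Hg. unfold trig_sum.
  rewrite (RInt_fun_ext _ (fun x => sum_n_m (fun n => a n * (g x * cos (INR n * x))
                                             + b n * (g x * sin (INR n * x))) 1 N)).
  - rewrite RInt_sum_n_m_continuity by (intros; reg).
    apply sum_n_m_fun_ext. intros n. now rewrite RInt_plus_continuity, !RInt_scal_continuity by reg.
  - intros x. rewrite <- sum_n_m_Rmult_l. apply sum_n_m_fun_ext. intros; ring.
Qed.

Lemma sum_n_m_kronecker (c : nat -> R) k p q :
  sum_n_m (fun n => if Nat.eq_dec n k then c n else 0) p q =
  (if ((p <=? k) && (k <=? q))%bool then c k else 0) :> R.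
Proof.
  destruct (le_lt_dec p q) as [Hpq | Hpq].
  - induction Hpq as [| q Hpq IH].
    + rewrite sum_n_n.
      destruct (Nat.eq_dec p k), (Nat.leb_spec p k), (Nat.leb_spec k p); subst; simpl; lia || ring.
    + rewrite sum_n_m_Sm, IH by lia.
      destruct (Nat.eq_dec (S q) k), (Nat.leb_spec p k), (Nat.leb_spec k q), (Nat.leb_spec k (S q));
        subst; simpl; lia || ring.
  - rewrite sum_n_m_empty by lia.
    destruct (Nat.leb_spec p k), (Nat.leb_spec k q); simpl; lia || ring.
Qed.

Lemma fourier_cos_trig_sum a b N k :
  fourier_cos (trig_sum a b N) k = if ((1 <=? k) && (k <=? N))%bool then PI * a k else 0.
Proof.
  unfold fourier_cos. rewrite (RInt_fun_ext _ (fun x => cos (INR k * x) * trig_sum a b N x))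
    by (intros; apply Rmult_comm).
  rewrite RInt_mul_trig_sum by reg. unfold fourier_cos, fourier_sin.
  rewrite <- (sum_n_m_kronecker (fun n => PI * a n)).
  apply sum_n_m_fun_ext_loc. intros n Hn.
  rewrite (RInt_fun_ext (fun t => cos (INR k * t) * sin (INR n * t))
                        (fun t => sin (INR n * t) * cos (INR k * t)))
    by (intros; apply Rmult_comm).
  rewrite RInt_cos_cos, RInt_sin_cos.
  destruct (Nat.eq_dec k n), (Nat.eq_dec n k), (Nat.eq_dec k 0); subst; lia || ring.
Qed.

Lemma fourier_sin_trig_sum a b N k :
  fourier_sin (trig_sum a b N) k = if ((1 <=? k) && (k <=? N))%bool then PI * b k else 0.
Proof.
  unfold fourier_sin. rewrite (RInt_fun_ext _ (fun x => sin (INR k * x) * trig_sum a b N x))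
    by (intros; apply Rmult_comm).
  rewrite RInt_mul_trig_sum by reg. unfold fourier_cos, fourier_sin.
  rewrite <- (sum_n_m_kronecker (fun n => PI * b n)).
  apply sum_n_m_fun_ext_loc. intros n Hn.
  rewrite RInt_sin_sin, RInt_sin_cos.
  destruct (Nat.eq_dec k n), (Nat.eq_dec n k), (Nat.eq_dec k 0); subst; lia || ring.
Qed.

Lemma fourier_cos_fourier_sum h N k : RInt h 0 (2 * PI) = 0 ->
  fourier_cos (fourier_sum h N) k = if k <=? N then fourier_cos h k else 0.
Proof.
  intros Hmean. unfold fourier_sum. rewrite fourier_cos_trig_sum. pose proof PI_RGT_0.
  destruct k as [| k].
  - rewrite fourier_cos_0, Hmean. now destruct (0 <=? N).
  - destruct (Nat.leb_spec (S k) N); simpl; [field; lra | reflexivity].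
Qed.

Lemma fourier_sin_fourier_sum h N k :
  fourier_sin (fourier_sum h N) k = if k <=? N then fourier_sin h k else 0.
Proof.
  unfold fourier_sum. rewrite fourier_sin_trig_sum. pose proof PI_RGT_0.
  destruct k as [| k].
  - rewrite fourier_sin_0. now destruct (0 <=? N).
  - destruct (Nat.leb_spec (S k) N); simpl; [field; lra | reflexivity].
Qed.

Lemma RInt_mul_fourier_sum g h N : continuity g ->
  RInt (fun x => g x * fourier_sum h N x) 0 (2 * PI) =
  sum_n_m (fun n => fourier_cos h n * fourier_cos g n + fourier_sin h n * fourier_sin g n) 1 N / PI :> R.
Proof.
  intros Hg. unfold fourier_sum. rewrite RInt_mul_trig_sum by exact Hg.
  unfold Rdiv at 3. rewrite Rmult_comm, <- sum_n_m_Rmult_l.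
  apply sum_n_m_fun_ext. intros n. unfold Rdiv. ring.
Qed.

(* Expanding the square, both cross terms equal the truncated energy sum (orthogonality). *)
Lemma bessel_identity h N : continuity h ->
  RInt (fun x => (h x - fourier_sum h N x) ^ 2) 0 (2 * PI) =
  RInt (fun x => h x ^ 2) 0 (2 * PI) - sum_n_m (fourier_energy h) 1 N / PI :> R.
Proof.
  intros Hh. set (S := fourier_sum h N).
  assert (HS : continuity S) by apply continuity_fourier_sum.
  rewrite (RInt_fun_ext _ (fun x => h x ^ 2 - (2 * (h x * S x) - S x * S x))) by (intros; ring).
  rewrite RInt_minus_continuity, RInt_minus_continuity, RInt_scal_continuity by reg.
  unfold S. rewrite !RInt_mul_fourier_sum by (auto; apply continuity_fourier_sum).
  assert (E : sum_n_m (fun n => fourier_cos h n * fourier_cos (fourier_sum h N) n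
                             + fourier_sin h n * fourier_sin (fourier_sum h N) n) 1 N
              = sum_n_m (fourier_energy h) 1 N :> R).
  { apply sum_n_m_fun_ext_loc. intros n Hn.
    unfold fourier_sum. rewrite fourier_cos_trig_sum, fourier_sin_trig_sum.
    destruct (Nat.leb_spec 1 n), (Nat.leb_spec n N); try lia. simpl.
    unfold fourier_energy. field. pose proof PI_RGT_0. lra. }
  rewrite E. unfold fourier_energy.
  rewrite (sum_n_m_fun_ext (fun n => _ * _ + _ * _) (fun n => fourier_cos h n ^ 2 + fourier_sin h n ^ 2))
    by (intros; ring).
  ring.
Qed.

Lemma RInt_fourier_remainder_ge0 h N : continuity h ->
  0 <= RInt (fun x => (h x - fourier_sum h N x) ^ 2) 0 (2 * PI).
Proof.
  intros Hh. pose proof (continuity_fourier_sum h N). pose proof PI_RGT_0.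
  apply RInt_ge0_continuity; [lra | reg | intros; apply pow2_ge_0].
Qed.

Lemma bessel_inequality h N : continuity h ->
  sum_n_m (fourier_energy h) 1 N / PI <= RInt (fun x => h x ^ 2) 0 (2 * PI).
Proof.
  intros Hh. pose proof (RInt_fourier_remainder_ge0 h N Hh) as H.
  rewrite bessel_identity in H by exact Hh. lra.
Qed.

(** * Uniqueness of the Fourier coefficients *)

Lemma continuity_eps (f : R -> R) x eps : continuity f -> 0 < eps ->
  exists d, 0 < d /\ forall y, Rabs (y - x) < d -> Rabs (f y - f x) < eps.
Proof.
  intros Hf He. destruct (Hf x eps He) as [d [Hd Hd']]. exists d. split; auto.
  intros y Hy. destruct (Req_dec y x) as [-> | Hne].
  - now rewrite Rminus_diag, Rabs_R0.
  - apply (Hd' y). repeat split; auto.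
Qed.

Lemma continuity_bounded (f : R -> R) a b : a <= b -> continuity f ->
  exists M, forall y, a <= y <= b -> Rabs (f y) <= M.
Proof.
  intros Hab Hf.
  destruct (continuity_ab_maj (fun y => Rabs (f y)) a b Hab) as [y0 [Hy0 _]].
  - intros c _. apply continuity_pt_filterlim, (continuous_Rabs_comp f), continuity_pt_filterlim, Hf.
  - now exists (Rabs (f y0)).
Qed.

Lemma continuity_zero_closure (f : R -> R) a b : a < b -> continuity f ->
  (forall y, a < y < b -> f y = 0) -> forall x, a <= x <= b -> f x = 0.
Proof.
  intros Hab Hf H x Hx. destruct (Req_dec (f x) 0) as [E | Hne]; auto. exfalso.
  destruct (continuity_eps f x (Rabs (f x)) Hf) as [d [Hd Hd']]; [now apply Rabs_pos_lt |].
  set (y := if Rle_dec x ((a + b) / 2) then x + Rmin (d / 2) ((b - a) / 4)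
            else x - Rmin (d / 2) ((b - a) / 4)).
  assert (Hs : 0 < Rmin (d / 2) ((b - a) / 4) < d).
  { pose proof (Rmin_l (d / 2) ((b - a) / 4)). split; [apply Rmin_glb_lt |]; lra. }
  assert (Hy : a < y < b /\ Rabs (y - x) < d).
  { pose proof (Rmin_r (d / 2) ((b - a) / 4)).
    unfold y; destruct (Rle_dec x ((a + b) / 2)); (split; [split; lra | apply Rabs_def1; lra]). }
  specialize (Hd' y (proj2 Hy)). rewrite H, Rminus_0_l, Rabs_Ropp in Hd' by apply Hy. lra.
Qed.

Inductive trig_span : (R -> R) -> Prop :=
| trig_span_cos k : trig_span (fun x => cos (INR k * x))
| trig_span_sin k : trig_span (fun x => sin (INR k * x))
| trig_span_plus f g : trig_span f -> trig_span g -> trig_span (fun x => f x + g x)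
| trig_span_scal c f : trig_span f -> trig_span (fun x => c * f x)
| trig_span_ext f g : trig_span f -> (forall x, f x = g x) -> trig_span g.

Lemma continuity_trig_span f : trig_span f -> continuity f.
Proof.
  induction 1; try reg.
  now apply continuity_ext with f.
Qed.

Lemma RInt_mul_trig_span psi : continuity psi ->
  (forall k, fourier_cos psi k = 0) -> (forall k, fourier_sin psi k = 0) ->
  forall T, trig_span T -> RInt (fun x => psi x * T x) 0 (2 * PI) = 0 :> R.
Proof.
  intros Hpsi Hcos Hsin T HT.
  induction HT as [k | k | f g Hf IHf Hg IHg | c f Hf IHf | f g Hf IHf E].
  - apply Hcos.
  - apply Hsin.
  - apply continuity_trig_span in Hf, Hg.
    rewrite (RInt_fun_ext _ (fun x => psi x * f x + psi x * g x)) by (intros; ring).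
    rewrite RInt_plus_continuity, IHf, IHg by reg. ring.
  - apply continuity_trig_span in Hf.
    rewrite (RInt_fun_ext _ (fun x => c * (psi x * f x))) by (intros; ring).
    rewrite RInt_scal_continuity, IHf by reg. ring.
  - rewrite (RInt_fun_ext _ (fun x => psi x * f x)); [exact IHf | intros x; now rewrite E].
Qed.

Lemma trig_span_const c : trig_span (fun _ => c).
Proof.
  apply trig_span_ext with (fun x => c * cos (INR 0 * x)).
  - apply trig_span_scal, trig_span_cos.
  - intros x. now rewrite Rmult_0_l, cos_0, Rmult_1_r.
Qed.

Lemma trig_span_mul_cos f : trig_span f -> trig_span (fun x => f x * cos x).
Proof.
  induction 1 as [[| k] | [| k] | f g _ IHf _ IHg | c f _ IHf | f g _ IHf E].
  - apply trig_span_ext with (fun x => cos (INR 1 * x)); [apply trig_span_cos |].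
    intros x. simpl. now rewrite Rmult_0_l, cos_0, !Rmult_1_l.
  - apply trig_span_ext with (fun x => /2 * cos (INR (S (S k)) * x) + /2 * cos (INR k * x)).
    + apply trig_span_plus; apply trig_span_scal, trig_span_cos.
    + intros x. rewrite !S_INR.
      replace ((INR k + 1 + 1) * x) with ((INR k + 1) * x + x) by ring.
      replace (INR k * x) with ((INR k + 1) * x - x) by ring.
      rewrite cos_plus, cos_minus. field.
  - apply trig_span_ext with (fun _ => 0); [apply trig_span_const |].
    intros x. simpl. now rewrite Rmult_0_l, sin_0, Rmult_0_l.
  - apply trig_span_ext with (fun x => /2 * sin (INR (S (S k)) * x) + /2 * sin (INR k * x)).
    + apply trig_span_plus; apply trig_span_scal, trig_span_sin.
    + intros x. rewrite !S_INR.
      replace ((INR k + 1 + 1) * x) with ((INR k + 1) * x + x) by ring.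
      replace (INR k * x) with ((INR k + 1) * x - x) by ring.
      rewrite sin_plus, sin_minus. field.
  - apply trig_span_ext with (fun x => f x * cos x + g x * cos x); [now apply trig_span_plus |].
    intros; ring.
  - apply trig_span_ext with (fun x => c * (f x * cos x)); [now apply trig_span_scal |].
    intros; ring.
  - apply trig_span_ext with (fun x => f x * cos x); auto.
    intros x. now rewrite E.
Qed.

Lemma trig_span_mul_sin f : trig_span f -> trig_span (fun x => f x * sin x).
Proof.
  induction 1 as [[| k] | [| k] | f g _ IHf _ IHg | c f _ IHf | f g _ IHf E].
  - apply trig_span_ext with (fun x => sin (INR 1 * x)); [apply trig_span_sin |].
    intros x. simpl. now rewrite Rmult_0_l, cos_0, !Rmult_1_l.
  - apply trig_span_ext with (fun x => /2 * sin (INR (S (S k)) * x) + - /2 * sin (INR k * x)).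
    + apply trig_span_plus; apply trig_span_scal, trig_span_sin.
    + intros x. rewrite !S_INR.
      replace ((INR k + 1 + 1) * x) with ((INR k + 1) * x + x) by ring.
      replace (INR k * x) with ((INR k + 1) * x - x) by ring.
      rewrite sin_plus, sin_minus. field.
  - apply trig_span_ext with (fun _ => 0); [apply trig_span_const |].
    intros x. simpl. now rewrite Rmult_0_l, sin_0, Rmult_0_l.
  - apply trig_span_ext with (fun x => - /2 * cos (INR (S (S k)) * x) + /2 * cos (INR k * x)).
    + apply trig_span_plus; apply trig_span_scal, trig_span_cos.
    + intros x. rewrite !S_INR.
      replace ((INR k + 1 + 1) * x) with ((INR k + 1) * x + x) by ring.
      replace (INR k * x) with ((INR k + 1) * x - x) by ring.
      rewrite cos_plus, cos_minus. field.
  - apply trig_span_ext with (fun x => f x * sin x + g x * sin x); [now apply trig_span_plus |].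
    intros; ring.
  - apply trig_span_ext with (fun x => c * (f x * sin x)); [now apply trig_span_scal |].
    intros; ring.
  - apply trig_span_ext with (fun x => f x * sin x); auto.
    intros x. now rewrite E.
Qed.

Lemma trig_span_cos_shift_pow e x0 N : trig_span (fun x => (e + cos (x - x0)) ^ N).
Proof.
  induction N as [| N IH].
  - exact (trig_span_const 1).
  - apply trig_span_ext with (fun x => e * (e + cos (x - x0)) ^ N
      + (cos x0 * ((e + cos (x - x0)) ^ N * cos x) + sin x0 * ((e + cos (x - x0)) ^ N * sin x))).
    + apply trig_span_plus; [now apply trig_span_scal |].
      apply trig_span_plus; apply trig_span_scal;
        [apply trig_span_mul_cos | apply trig_span_mul_sin]; exact IH.
    + intros x. simpl. rewrite cos_minus. ring.
Qed.

Lemma cos_Rabs y : cos (Rabs y) = cos y.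
Proof. unfold Rabs. destruct (Rcase_abs y); [apply cos_neg | reflexivity]. Qed.

Lemma cos_ge_of_Rabs_le a y : 0 <= a <= PI -> Rabs y <= a -> cos a <= cos y.
Proof. intros Ha Hy. rewrite <- (cos_Rabs y). pose proof (Rabs_pos y). apply cos_decr_1; lra. Qed.

Lemma cos_le_of_Rabs_ge a y : 0 <= a <= PI -> a <= Rabs y <= 2 * PI - a -> cos y <= cos a.
Proof.
  intros Ha Hy. rewrite <- (cos_Rabs y). pose proof (Rabs_pos y).
  destruct (Rle_dec (Rabs y) PI).
  - apply cos_decr_1; lra.
  - replace (cos (Rabs y)) with (cos (2 * PI - Rabs y)) by
      (rewrite cos_minus, cos_2PI, sin_2PI; ring).
    apply cos_decr_1; lra.
Qed.

Lemma RInt_ge_of_bump (g : R -> R) a u v b M L : a <= u <= v -> v <= b -> continuity g ->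
  (forall y, a <= y <= b -> - M <= g y) -> (forall y, u <= y <= v -> L <= g y) ->
  (v - u) * L - (b - a) * M + (v - u) * M <= RInt g a b.
Proof.
  intros Hu Hv Hg Hlow Hbump.
  rewrite <- (RInt_Chasles g a u b), <- (RInt_Chasles g u v b) by now apply ex_RInt_continuity.
  assert (I1 : (u - a) * - M <= RInt g a u).
  { rewrite <- RInt_const_R. apply RInt_le_continuity; [lra | reg | exact Hg |].
    intros; apply Hlow; lra. }
  assert (I2 : (v - u) * L <= RInt g u v).
  { rewrite <- RInt_const_R. apply RInt_le_continuity; [lra | reg | exact Hg |].
    intros; apply Hbump; lra. }
  assert (I3 : (b - v) * - M <= RInt g v b).
  { rewrite <- RInt_const_R. apply RInt_le_continuity; [lra | reg | exact Hg |].
    intros; apply Hlow; lra. }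
  change plus with Rplus. lra.
Qed.

Lemma cos_kernel_base_gt1 d : 0 < d < 1 -> 1 < (1 - cos d) / 2 + cos (d / 2).
Proof.
  intros Hd. pose proof PI2_1.
  assert (cos (d / 2) < 1) by (rewrite <- cos_0; apply cos_decreasing_1; lra).
  assert (0 < cos (d / 2)) by (apply cos_gt_0; lra).
  replace d with (2 * (d / 2)) at 1 by field. rewrite cos_2a_cos. nra.
Qed.

Lemma cos_kernel_pow_ge psi x0 d M N : 0 < d < 1 -> d < x0 < 2 * PI - d ->
  (forall y, 0 <= y <= 2 * PI -> Rabs (psi y) <= M) ->
  (forall y, Rabs (y - x0) <= d -> 0 <= psi y) ->
  forall y, 0 <= y <= 2 * PI -> - M <= psi y * ((1 - cos d) / 2 + cos (y - x0)) ^ N.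
Proof.
  intros Hd Hx0 HM Hnear y Hy. pose proof PI2_1. pose proof (COS_bound d).
  pose proof (HM y Hy). pose proof (Rabs_pos (psi y)).
  set (e := (1 - cos d) / 2).
  destruct (Rle_dec (Rabs (y - x0)) d) as [Hyd | Hyd].
  - assert (cos d <= cos (y - x0)) by (apply cos_ge_of_Rabs_le; lra).
    assert (0 <= (e + cos (y - x0)) ^ N) by (apply pow_le; unfold e; lra).
    pose proof (Hnear y Hyd). nra.
  - assert (cos (y - x0) <= cos d)
      by (apply cos_le_of_Rabs_ge; [lra | split; [lra | apply Rabs_le; lra]]).
    assert (Rabs (e + cos (y - x0)) <= 1)
      by (pose proof (COS_bound (y - x0)); apply Rabs_le; unfold e; lra).
    assert (Rabs (psi y * (e + cos (y - x0)) ^ N) <= M * 1).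
    { rewrite Rabs_mult, <- RPow_abs. apply Rmult_le_compat; auto using Rabs_pos.
      - apply pow_le, Rabs_pos.
      - rewrite <- (pow1 N). apply pow_incr. split; auto using Rabs_pos. }
    apply Rabs_le_between in H5. lra.
Qed.

(* A function orthogonal to all trigonometric polynomials cannot be positive at an interior point:
   integrate it against the powers [(e + cos (x - x0)) ^ N] of a kernel that exceeds [1] near [x0]
   and stays in [[-1, 1]] away from it. *)
Lemma orthogonal_trig_span_nonpos psi x0 : continuity psi ->
  (forall T, trig_span T -> RInt (fun x => psi x * T x) 0 (2 * PI) = 0 :> R) ->
  0 < x0 < 2 * PI -> psi x0 <= 0.
Proof.
  intros Hpsi Horth Hx0. apply Rnot_lt_le. intros Hpos.
  pose proof PI_RGT_0. pose proof PI2_1.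
  set (c := psi x0 / 2). assert (Hc : 0 < c) by (unfold c; lra).
  destruct (continuity_eps psi x0 c Hpsi) as [d1 [Hd1 Hd1']]; [exact Hc |].
  set (d := Rmin (Rmin d1 x0) (Rmin (2 * PI - x0) 1) / 2).
  assert (Hd : 0 < d /\ d < d1 /\ d < x0 /\ d < 2 * PI - x0 /\ d < 1).
  { pose proof (Rmin_l (Rmin d1 x0) (Rmin (2 * PI - x0) 1)).
    pose proof (Rmin_r (Rmin d1 x0) (Rmin (2 * PI - x0) 1)).
    pose proof (Rmin_l d1 x0). pose proof (Rmin_r d1 x0).
    pose proof (Rmin_l (2 * PI - x0) 1). pose proof (Rmin_r (2 * PI - x0) 1).
    assert (0 < Rmin (Rmin d1 x0) (Rmin (2 * PI - x0) 1)) by (repeat apply Rmin_glb_lt; lra).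
    unfold d. lra. }
  assert (Hnear : forall y, Rabs (y - x0) <= d -> c <= psi y).
  { intros y Hy. assert (Rabs (psi y - psi x0) < c) by (apply Hd1'; lra).
    apply Rabs_def2 in H1. unfold c in *. lra. }
  destruct (continuity_bounded psi 0 (2 * PI)) as [M HM]; [lra | exact Hpsi |].
  set (r := (1 - cos d) / 2 + cos (d / 2)).
  assert (Hr : 1 < r) by (apply cos_kernel_base_gt1; lra).
  set (K := fun N y => ((1 - cos d) / 2 + cos (y - x0)) ^ N).
  assert (Hbump : forall N y, x0 - d / 2 <= y <= x0 + d / 2 -> c * r ^ N <= psi y * K N y).
  { intros N y Hy. unfold K.
    assert (cos (d / 2) <= cos (y - x0)) by (apply cos_ge_of_Rabs_le; [lra | apply Rabs_le; lra]).
    apply Rmult_le_compat; [lra | apply pow_le; lra | apply Hnear, Rabs_le; lra |].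
    apply pow_incr. split; [lra | unfold r; lra]. }
  destruct (Pow_x_infinity r) with (b := 2 * PI * M / (d * c) + 1) as [N HN].
  { rewrite Rabs_right; lra. }
  specialize (HN N (le_n N)). rewrite Rabs_right in HN by (apply Rle_ge, pow_le; lra).
  assert (Hint := RInt_ge_of_bump (fun y => psi y * K N y) 0 (x0 - d / 2) (x0 + d / 2) (2 * PI)
                    M (c * r ^ N)).
  rewrite Horth in Hint by apply trig_span_cos_shift_pow.
  specialize (Hint ltac:(lra) ltac:(lra) ltac:(unfold K; reg)).
  assert (Hlow : forall y, 0 <= y <= 2 * PI -> - M <= psi y * K N y).
  { apply cos_kernel_pow_ge; [lra | lra | exact HM |].
    intros y Hy. pose proof (Hnear y Hy). lra. }
  specialize (Hint Hlow (Hbump N)).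
  replace (x0 + d / 2 - (x0 - d / 2)) with d in Hint by field.
  assert (0 < d * c) by (apply Rmult_lt_0_compat; lra).
  assert (2 * PI * M < d * c * r ^ N).
  { replace (2 * PI * M) with (d * c * (2 * PI * M / (d * c))) by (field; split; lra).
    apply Rmult_lt_compat_l; lra. }
  assert (0 <= M) by (pose proof (HM 0 ltac:(lra)); pose proof (Rabs_pos (psi 0)); lra).
  nra.
Qed.

Lemma fourier_uniqueness psi : continuity psi ->
  (forall k, fourier_cos psi k = 0) -> (forall k, fourier_sin psi k = 0) ->
  forall x, 0 <= x <= 2 * PI -> psi x = 0.
Proof.
  intros Hpsi Hcos Hsin. pose proof PI_RGT_0.
  apply continuity_zero_closure; [lra | exact Hpsi |]. intros y Hy.
  pose proof (RInt_mul_trig_span psi Hpsi Hcos Hsin) as Horth.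
  apply Rle_antisym.
  - now apply orthogonal_trig_span_nonpos.
  - rewrite <- (Ropp_involutive (psi y)). apply Ropp_0_ge_le_contravar, Rle_ge.
    apply (orthogonal_trig_span_nonpos (fun x => - psi x)); [reg | | exact Hy].
    intros T HT. pose proof (continuity_trig_span T HT).
    rewrite (RInt_fun_ext _ (fun x => -1 * (psi x * T x))) by (intros; ring).
    rewrite RInt_scal_continuity, Horth by (auto; reg). ring.
Qed.

(** * Parseval's identity for C^1 periodic functions *)

Lemma Rabs_le_inv_sq_plus a n : (1 <= n)%nat ->
  Rabs a <= / INR n ^ 2 / 2 + INR n ^ 2 * a ^ 2 / 2.
Proof.
  intros Hn. assert (1 <= INR n) by (apply (le_INR 1); lia).
  assert (H0 : 0 <= (/ INR n - INR n * Rabs a) ^ 2) by apply pow2_ge_0.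
  replace (a ^ 2) with (Rabs a ^ 2) by apply pow2_abs.
  replace ((/ INR n - INR n * Rabs a) ^ 2) with (/ INR n ^ 2 - 2 * Rabs a + INR n ^ 2 * Rabs a ^ 2) in H0
    by (field; lra).
  lra.
Qed.

Lemma sum_inv_sq_tail M N : (1 <= M)%nat -> (M <= N)%nat ->
  sum_n_m (fun n => / INR n ^ 2) (S M) N <= / INR M.
Proof.
  intros HM HMN. assert (0 < INR N) by (apply lt_0_INR; lia).
  enough (sum_n_m (fun n => / INR n ^ 2) (S M) N <= / INR M - / INR N)
    by (pose proof (Rinv_0_lt_compat _ H); lra).
  induction HMN as [| N HMN IH].
  - rewrite sum_n_m_empty by lia. lra.
  - rewrite sum_n_m_Sm by lia. assert (1 <= INR N) by (apply (le_INR 1); lia).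
    specialize (IH ltac:(lra)). rewrite S_INR.
    assert (/ (INR N + 1) ^ 2 <= / INR N - / (INR N + 1)).
    { replace (/ INR N - / (INR N + 1)) with (/ (INR N * (INR N + 1))) by (field; lra).
      apply Rinv_le_contravar; nra. }
    lra.
Qed.

(* Finite [sum n^2 (A_n^2 + B_n^2)] forces absolute summability: [|A| <= 1/(2 n^2) + n^2 A^2 / 2]. *)
Lemma sum_abs_tail_small (A B : nat -> R) K :
  (forall N, sum_n_m (fun n => INR n ^ 2 * (A n ^ 2 + B n ^ 2)) 1 N <= K) ->
  forall eps, 0 < eps -> exists M0, forall M N, (M0 <= M)%nat -> (M <= N)%nat ->
    sum_n_m (fun n => Rabs (A n) + Rabs (B n)) (S M) N <= eps.
Proof.
  intros HK eps Heps.
  set (P := fun N => sum_n_m (fun n => INR n ^ 2 * (A n ^ 2 + B n ^ 2)) 1 N).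
  assert (Hcauchy : ex_lim_seq_cauchy P).
  { apply ex_lim_seq_cauchy_corr, ex_finite_lim_seq_incr with K; auto.
    intros N. unfold P. rewrite sum_n_m_Sm by lia.
    pose proof (pow2_ge_0 (INR (S N))). pose proof (pow2_ge_0 (A (S N))).
    pose proof (pow2_ge_0 (B (S N))). nra. }
  destruct (Hcauchy (mkposreal (eps / 2) ltac:(lra))) as [N1 HN1]. simpl in HN1.
  destruct (INR_unbounded (2 / eps)) as [N2 HN2].
  exists (S (N1 + N2)). intros M N HM HMN.
  assert (HP : P N = P M + sum_n_m (fun n => INR n ^ 2 * (A n ^ 2 + B n ^ 2)) (S M) N).
  { unfold P. now rewrite (sum_n_m_Chasles _ 1 M N) by lia. }
  assert (Hterm : sum_n_m (fun n => Rabs (A n) + Rabs (B n)) (S M) N <=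
                  sum_n_m (fun n => / INR n ^ 2) (S M) N + / 2 * (P N - P M)).
  { rewrite HP, Rplus_minus_l, <- sum_n_m_Rmult_l, <- sum_n_m_add.
    apply sum_n_m_le_loc. intros n Hn.
    pose proof (Rabs_le_inv_sq_plus (A n) n ltac:(lia)).
    pose proof (Rabs_le_inv_sq_plus (B n) n ltac:(lia)). lra. }
  assert (P N - P M <= eps / 2).
  { assert (Rabs (P N - P M) < eps / 2) by (apply HN1; lia). apply Rabs_def2 in H. lra. }
  assert (sum_n_m (fun n => / INR n ^ 2) (S M) N <= eps / 2).
  { eapply Rle_trans; [apply sum_inv_sq_tail; lia |].
    assert (2 / eps < INR M) by (pose proof (le_INR N2 M ltac:(lia)); lra).
    replace (eps / 2) with (/ (2 / eps)) by (field; lra).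
    apply Rinv_le_contravar; [apply Rdiv_lt_0_compat |]; lra. }
  lra.
Qed.

Lemma trig_sum_diff_le a b M N x : (M <= N)%nat ->
  Rabs (trig_sum a b N x - trig_sum a b M x) <= sum_n_m (fun n => Rabs (a n) + Rabs (b n)) (S M) N.
Proof.
  intros HMN. unfold trig_sum.
  rewrite (sum_n_m_Chasles _ 1 M N) by lia. change plus with Rplus. rewrite Rplus_minus_l.
  eapply Rle_trans; [apply Rabs_sum_n_m_le | apply sum_n_m_le]. intros n.
  eapply Rle_trans; [apply Rabs_triang |]. rewrite !Rabs_mult.
  pose proof (Rabs_pos (a n)). pose proof (Rabs_pos (b n)).
  assert (Rabs (cos (INR n * x)) <= 1) by (apply Rabs_le, COS_bound).
  assert (Rabs (sin (INR n * x)) <= 1) by (apply Rabs_le, SIN_bound).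
  nra.
Qed.

Lemma uniform_cauchy_limit (F : nat -> R -> R) : (forall N, continuity (F N)) ->
  (forall eps, 0 < eps -> exists M0, forall M N x, (M0 <= M)%nat -> (M <= N)%nat ->
     Rabs (F N x - F M x) <= eps) ->
  exists S, continuity S /\
    forall eps, 0 < eps -> exists M0, forall M x, (M0 <= M)%nat -> Rabs (S x - F M x) <= eps.
Proof.
  intros HF Hcauchy.
  assert (Hlim : forall x, ex_finite_lim_seq (fun N => F N x)).
  { intros x. apply ex_lim_seq_cauchy_corr. intros eps.
    destruct (Hcauchy (eps / 4)) as [M0 HM0]; [destruct eps; simpl; lra |].
    exists M0. intros n p Hn Hp.
    pose proof (HM0 M0 n x (le_n _) Hn). pose proof (HM0 M0 p x (le_n _) Hp).
    apply Rabs_le_between in H, H0. destruct eps as [e He]; simpl in *.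
    apply Rabs_def1; lra. }
  set (S := fun x => real (Lim_seq (fun N => F N x))).
  assert (HS : forall x, is_lim_seq (fun N => F N x) (S x)).
  { intros x. destruct (Hlim x) as [l Hl]. unfold S. now rewrite (is_lim_seq_unique _ _ Hl). }
  assert (Hunif : forall eps, 0 < eps ->
            exists M0, forall M x, (M0 <= M)%nat -> Rabs (S x - F M x) <= eps).
  { intros eps Heps. destruct (Hcauchy eps Heps) as [M0 HM0]. exists M0. intros M x HM.
    assert (Rbar_le (Rabs (S x - F M x)) eps); [| exact H].
    apply (is_lim_seq_le_loc (fun N => Rabs (F N x - F M x)) (fun _ => eps)).
    - exists M. intros N HN. now apply HM0.
    - apply (is_lim_seq_abs _ (S x - F M x)), is_lim_seq_minus'; [apply HS | apply is_lim_seq_const].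
    - apply is_lim_seq_const. }
  exists S. split; [| exact Hunif].
  intros x. apply (CVU_continuity F S x (mkposreal 1 Rlt_0_1)).
  - intros eps Heps. destruct (Hunif (eps / 2)) as [M0 HM0]; [lra |].
    exists M0. intros n y Hn _. pose proof (HM0 n y Hn). lra.
  - intros n y _. apply HF.
  - unfold Boule. simpl. rewrite Rminus_diag, Rabs_R0. lra.
Qed.

Lemma Rabs_RInt_mul_sub_le (g h w : R -> R) eps :
  continuity g -> continuity h -> continuity w -> (forall x, Rabs (w x) <= 1) ->
  (forall x, Rabs (g x - h x) <= eps) ->
  Rabs (RInt (fun x => g x * w x) 0 (2 * PI) - RInt (fun x => h x * w x) 0 (2 * PI)) <= 2 * PI * eps.
Proof.
  intros Hg Hh Hw Hw1 Hgh. pose proof PI_RGT_0.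
  rewrite <- RInt_minus_continuity by reg.
  replace (2 * PI * eps) with ((2 * PI - 0) * eps) by ring.
  apply abs_RInt_le_const; [lra | apply ex_RInt_continuity; reg |].
  intros x _. replace (g x * w x - h x * w x) with ((g x - h x) * w x) by ring.
  rewrite Rabs_mult. pose proof (Rabs_pos (g x - h x)). pose proof (Rabs_pos (w x)).
  specialize (Hgh x). specialize (Hw1 x). nra.
Qed.

Lemma eq0_of_Rabs_le_eps a : (forall eps, 0 < eps -> Rabs a <= eps) -> a = 0.
Proof.
  intros H. destruct (Req_dec a 0) as [E | Hne]; auto.
  assert (0 < Rabs a) by now apply Rabs_pos_lt.
  specialize (H (Rabs a / 2) ltac:(lra)). lra.
Qed.

Lemma fourier_cos_minus g h k : continuity g -> continuity h ->
  fourier_cos (fun x => g x - h x) k = fourier_cos g k - fourier_cos h k.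
Proof.
  intros Hg Hh. unfold fourier_cos.
  rewrite <- RInt_minus_continuity by reg. apply RInt_fun_ext. intros; ring.
Qed.

Lemma fourier_sin_minus g h k : continuity g -> continuity h ->
  fourier_sin (fun x => g x - h x) k = fourier_sin g k - fourier_sin h k.
Proof.
  intros Hg Hh. unfold fourier_sin.
  rewrite <- RInt_minus_continuity by reg. apply RInt_fun_ext. intros; ring.
Qed.

Lemma RInt_mul_uniform_limit (S w : R -> R) (F : nat -> R -> R) c M1 :
  continuity S -> (forall M, continuity (F M)) -> continuity w -> (forall x, Rabs (w x) <= 1) ->
  (forall eps, 0 < eps -> exists M0, forall M x, (M0 <= M)%nat -> Rabs (S x - F M x) <= eps) ->
  (forall M, (M1 <= M)%nat -> RInt (fun x => F M x * w x) 0 (2 * PI) = c) ->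
  RInt (fun x => S x * w x) 0 (2 * PI) = c.
Proof.
  intros HS HF Hw Hw1 Hunif Hc. pose proof PI_RGT_0.
  apply Rminus_diag_uniq, eq0_of_Rabs_le_eps. intros eps Heps.
  destruct (Hunif (eps / (2 * PI))) as [M0 HM0]; [apply Rdiv_lt_0_compat; lra |].
  rewrite <- (Hc (Nat.max M0 M1)) by lia.
  replace eps with (2 * PI * (eps / (2 * PI))) by (field; lra).
  apply Rabs_RInt_mul_sub_le; auto. intros x. apply HM0. lia.
Qed.

Section ParsevalC1.
Variables phi phi' : R -> R.
Hypothesis phi_derive : forall x, is_derive phi x (phi' x).
Hypothesis phi'_continuity : continuity phi'.
Hypothesis phi_periodic : phi (2 * PI) = phi 0.
Hypothesis phi_mean : RInt phi 0 (2 * PI) = 0.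

Let phi_continuity : continuity phi := continuity_of_is_derive phi phi' phi_derive.

Lemma fourier_cos_derive n : fourier_cos phi' n = INR n * fourier_sin phi n.
Proof.
  unfold fourier_cos, fourier_sin.
  rewrite (RInt_by_parts _ _ phi phi' (fun x => cos (INR n * x)) (fun x => - INR n * sin (INR n * x)));
    auto; [| intros x; auto_derive; auto; ring | reg].
  rewrite (RInt_fun_ext (fun x => phi x * (- INR n * sin (INR n * x)))
                        (fun x => - INR n * (phi x * sin (INR n * x)))) by (intros; ring).
  rewrite RInt_scal_continuity by (pose proof phi_continuity; reg).
  rewrite Rmult_0_r, cos_0, phi_periodic.
  rewrite INR_IZR_INZ, cos_IZR_2PI. ring.
Qed.

Lemma fourier_sin_derive n : fourier_sin phi' n = - INR n * fourier_cos phi n.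
Proof.
  unfold fourier_cos, fourier_sin.
  rewrite (RInt_by_parts _ _ phi phi' (fun x => sin (INR n * x)) (fun x => INR n * cos (INR n * x)));
    auto; [| intros x; auto_derive; auto; ring | reg].
  rewrite (RInt_fun_ext (fun x => phi x * (INR n * cos (INR n * x)))
                        (fun x => INR n * (phi x * cos (INR n * x)))) by (intros; ring).
  rewrite RInt_scal_continuity by (pose proof phi_continuity; reg).
  rewrite Rmult_0_r, sin_0.
  rewrite INR_IZR_INZ, sin_IZR_2PI. ring.
Qed.

Lemma fourier_energy_derive n : fourier_energy phi' n = INR n ^ 2 * fourier_energy phi n.
Proof. unfold fourier_energy. rewrite fourier_cos_derive, fourier_sin_derive. ring. Qed.

Lemma fourier_sum_C1_uniform_cauchy : forall eps, 0 < eps -> exists M0, forall M N x,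
  (M0 <= M)%nat -> (M <= N)%nat -> Rabs (fourier_sum phi N x - fourier_sum phi M x) <= eps.
Proof.
  intros eps Heps. pose proof PI_RGT_0.
  assert (Hbound : forall N, sum_n_m (fun n => INR n ^ 2 *
             ((fourier_cos phi n / PI) ^ 2 + (fourier_sin phi n / PI) ^ 2)) 1 N
           <= RInt (fun x => phi' x ^ 2) 0 (2 * PI) / PI).
  { intros N. pose proof (bessel_inequality phi' N phi'_continuity) as HB.
    replace (sum_n_m _ 1 N) with (sum_n_m (fourier_energy phi') 1 N / PI / PI).
    - unfold Rdiv at 1 3. apply Rmult_le_compat_r; [left; now apply Rinv_0_lt_compat | exact HB].
    - unfold Rdiv at 1 2. rewrite Rmult_assoc, Rmult_comm, <- sum_n_m_Rmult_l.
      apply sum_n_m_fun_ext. intros n. rewrite fourier_energy_derive. unfold fourier_energy.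
      field. lra. }
  destruct (sum_abs_tail_small _ _ _ Hbound eps Heps) as [M0 HM0].
  exists M0. intros M N x HM HMN.
  eapply Rle_trans; [apply trig_sum_diff_le; exact HMN | now apply HM0].
Qed.

Lemma fourier_sum_C1_uniform : forall eps, 0 < eps -> exists M0, forall N x,
  (M0 <= N)%nat -> 0 <= x <= 2 * PI -> Rabs (phi x - fourier_sum phi N x) <= eps.
Proof.
  pose proof phi_continuity as Hphi.
  destruct (uniform_cauchy_limit (fourier_sum phi) (continuity_fourier_sum phi)
              fourier_sum_C1_uniform_cauchy) as [S [HS Hunif]].
  assert (Hcos : forall k, fourier_cos S k = fourier_cos phi k).
  { intros k. apply (RInt_mul_uniform_limit S _ (fourier_sum phi) _ k); auto.
    - apply continuity_fourier_sum.
    - reg.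
    - intros x. apply Rabs_le, COS_bound.
    - intros M HM. fold (fourier_cos (fourier_sum phi M) k).
      rewrite fourier_cos_fourier_sum by exact phi_mean.
      now replace (k <=? M) with true by (symmetry; apply Nat.leb_le; lia). }
  assert (Hsin : forall k, fourier_sin S k = fourier_sin phi k).
  { intros k. apply (RInt_mul_uniform_limit S _ (fourier_sum phi) _ k); auto.
    - apply continuity_fourier_sum.
    - reg.
    - intros x. apply Rabs_le, SIN_bound.
    - intros M HM. fold (fourier_sin (fourier_sum phi M) k).
      rewrite fourier_sin_fourier_sum.
      now replace (k <=? M) with true by (symmetry; apply Nat.leb_le; lia). }
  assert (Heq : forall x, 0 <= x <= 2 * PI -> phi x - S x = 0).
  { apply fourier_uniqueness; [reg | |]; intros k.
    - rewrite fourier_cos_minus, Hcos by assumption. ring.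
    - rewrite fourier_sin_minus, Hsin by assumption. ring. }
  intros eps Heps. destruct (Hunif eps Heps) as [M0 HM0].
  exists M0. intros N x HN Hx. specialize (Heq x Hx).
  replace (phi x) with (S x) by lra. now apply HM0.
Qed.

Lemma parseval_C1 :
  is_lim_seq (fun N => sum_n_m (fourier_energy phi) 1 N / PI) (RInt (fun x => phi x ^ 2) 0 (2 * PI)).
Proof.
  pose proof phi_continuity as Hphi. pose proof PI_RGT_0.
  apply is_lim_seq_spec. intros eps. pose proof (cond_pos eps) as Heps.
  set (delta := Rmin 1 (eps / (4 * PI))).
  assert (Hdelta : 0 < delta <= 1 /\ delta <= eps / (4 * PI)).
  { pose proof (Rmin_l 1 (eps / (4 * PI))). pose proof (Rmin_r 1 (eps / (4 * PI))).
    assert (0 < delta) by (apply Rmin_glb_lt; [lra | apply Rdiv_lt_0_compat; lra]).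
    unfold delta in *. lra. }
  destruct (fourier_sum_C1_uniform delta) as [M0 HM0]; [lra |].
  exists M0. intros N HN.
  assert (Herr : RInt (fun x => (phi x - fourier_sum phi N x) ^ 2) 0 (2 * PI) <= 2 * PI * delta).
  { replace (2 * PI * delta) with ((2 * PI - 0) * delta) by ring. rewrite <- RInt_const_R.
    pose proof (continuity_fourier_sum phi N).
    apply RInt_le_continuity; [lra | reg | reg |].
    intros x Hx. specialize (HM0 N x HN ltac:(lra)).
    pose proof (pow_maj_Rabs _ _ 2 HM0). simpl in H0 |- *. nra. }
  pose proof (RInt_fourier_remainder_ge0 phi N Hphi) as Hpos.
  rewrite bessel_identity in Herr, Hpos by exact Hphi.
  assert (E : 2 * PI * (eps / (4 * PI)) = eps / 2) by (field; lra).
  assert (2 * PI * delta < eps) by nra.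
  apply Rabs_def1; lra.
Qed.

End ParsevalC1.

Section Periodic.
Variables (T : R) (g : R -> R).
Hypothesis g_periodic : forall t, g (t + T) = g t.

Lemma periodic_INR y n : g (y + INR n * T) = g y.
Proof.
  induction n as [| n IH].
  - now rewrite Rmult_0_l, Rplus_0_r.
  - rewrite S_INR. replace (y + (INR n + 1) * T) with (y + INR n * T + T) by ring.
    now rewrite g_periodic.
Qed.

Lemma periodic_IZR y z : g (y + IZR z * T) = g y.
Proof.
  destruct z as [| p | p].
  - now rewrite Rmult_0_l, Rplus_0_r.
  - rewrite <- positive_nat_Z, <- INR_IZR_INZ. apply periodic_INR.
  - rewrite <- (periodic_INR (y + IZR (Z.neg p) * T) (Pos.to_nat p)). f_equal.
    rewrite INR_IZR_INZ, positive_nat_Z, <- Pos2Z.opp_pos, opp_IZR. ring.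
Qed.

End Periodic.

Lemma periodic_ext (T : R) (g h : R -> R) : 0 < T ->
  (forall t, g (t + T) = g t) -> (forall t, h (t + T) = h t) ->
  (forall y, 0 <= y <= T -> g y = h y) -> forall t, g t = h t.
Proof.
  intros HT Hg Hh E t.
  set (z := (up (t / T) - 1)%Z).
  assert (Hz : IZR z <= t / T < IZR z + 1).
  { destruct (archimed (t / T)). unfold z. rewrite minus_IZR. simpl. lra. }
  assert (Hy : 0 <= t - IZR z * T <= T).
  { assert (t = t / T * T) by (field; lra). split; nra. }
  replace t with ((t - IZR z * T) + IZR z * T) by ring.
  rewrite (periodic_IZR T g Hg), (periodic_IZR T h Hh). now apply E.
Qed.

Lemma fourier_sum_eq_of_high_coef_zero h N : continuity h -> RInt h 0 (2 * PI) = 0 ->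
  (forall n, (N < n)%nat -> fourier_cos h n = 0 /\ fourier_sin h n = 0) ->
  forall x, 0 <= x <= 2 * PI -> h x = fourier_sum h N x.
Proof.
  intros Hh Hmean Hhigh x Hx. apply Rminus_diag_uniq. revert x Hx.
  pose proof (continuity_fourier_sum h N).
  apply fourier_uniqueness; [reg | |]; intros k.
  - rewrite fourier_cos_minus, fourier_cos_fourier_sum by assumption.
    destruct (Nat.leb_spec k N) as [_ | Hk]; [ring |]. rewrite (proj1 (Hhigh k Hk)). ring.
  - rewrite fourier_sin_minus, fourier_sin_fourier_sum by assumption.
    destruct (Nat.leb_spec k N) as [_ | Hk]; [ring |]. rewrite (proj2 (Hhigh k Hk)). ring.
Qed.

Lemma parseval_of_high_coef_zero h N : continuity h -> RInt h 0 (2 * PI) = 0 ->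
  (forall n, (N < n)%nat -> fourier_cos h n = 0 /\ fourier_sin h n = 0) ->
  RInt (fun x => h x ^ 2) 0 (2 * PI) = sum_n_m (fourier_energy h) 1 N / PI :> R.
Proof.
  intros Hh Hmean Hhigh.
  assert (E : RInt (fun x => (h x - fourier_sum h N x) ^ 2) 0 (2 * PI) = 0 :> R).
  { rewrite (RInt_ext _ (fun _ => 0)), RInt_const_R; [ring |].
    intros x Hx. rewrite Rmin_left, Rmax_right in Hx by (pose proof PI_RGT_0; lra).
    rewrite <- fourier_sum_eq_of_high_coef_zero by (auto; lra). rewrite Rminus_diag. apply pow_i. lia. }
  rewrite bessel_identity in E by exact Hh. lra.
Qed.

(** * Energies of the derivatives of a C^m periodic function *)

Lemma fourier_energy_eq0 h n :
  fourier_energy h n = 0 -> fourier_cos h n = 0 /\ fourier_sin h n = 0.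
Proof.
  unfold fourier_energy. intros E. apply Rplus_sqr_eq_0. unfold Rsqr. simpl in E. lra.
Qed.

Definition Derive_n_energy (f : R -> R) (k : nat) : R :=
  RInt (fun t => Derive_n f k t ^ 2) 0 (2 * PI).

Definition spectral_sum (f : R -> R) (k N : nat) : R :=
  sum_n_m (fun n => (INR n ^ 2) ^ k * fourier_energy f n) 1 N / PI.

(* [Cm] is stated with ssrnat's boolean order. *)
Lemma leq_of_le k m : (k <= m)%nat -> is_true (ssrnat.leq k m).
Proof. intros H. now destruct (@ssrnat.leP k m). Qed.

Section SmoothPeriodic.
Variables (m : nat) (f : R -> R).
Hypothesis f_Cm : Cm m f.
Hypothesis f_periodic : forall t, f (t + 2 * PI) = f t.
Hypothesis f_mean : RInt f 0 (2 * PI) = 0.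

Lemma continuity_Derive_n k : (k <= m)%nat -> continuity (Derive_n f k).
Proof.
  intros Hk x. apply continuity_pt_filterlim, (proj2 f_Cm k x), leq_of_le, Hk.
Qed.

Lemma is_derive_Derive_n k : (k < m)%nat -> forall x, is_derive (Derive_n f k) x (Derive_n f (S k) x).
Proof. intros Hk x. apply Derive_correct, (proj1 f_Cm k x), leq_of_le, Hk. Qed.

Lemma Derive_n_periodic k : Derive_n f k (2 * PI) = Derive_n f k 0.
Proof.
  rewrite <- (Rplus_0_l (2 * PI)), <- Derive_n_comp_trans.
  apply Derive_n_ext. intros; apply f_periodic.
Qed.

Lemma RInt_Derive_n k : (k <= m)%nat -> RInt (Derive_n f k) 0 (2 * PI) = 0 :> R.
Proof.
  destruct k as [| k]; intros Hk; [exact f_mean |].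
  rewrite (RInt_derive_continuity _ _ (Derive_n f k)).
  - rewrite Derive_n_periodic. ring.
  - apply is_derive_Derive_n. lia.
  - now apply continuity_Derive_n.
Qed.

Lemma fourier_energy_Derive_n k n : (k <= m)%nat ->
  fourier_energy (Derive_n f k) n = (INR n ^ 2) ^ k * fourier_energy f n.
Proof.
  induction k as [| k IH]; intros Hk.
  - now rewrite pow_O, Rmult_1_l.
  - rewrite (fourier_energy_derive (Derive_n f k)); auto using is_derive_Derive_n, Derive_n_periodic.
    + rewrite IH by lia. simpl. ring.
    + now apply continuity_Derive_n.
Qed.

Lemma spectral_sum_le_energy k N : (k <= m)%nat -> spectral_sum f k N <= Derive_n_energy f k.
Proof.
  intros Hk. unfold spectral_sum, Derive_n_energy.
  rewrite (sum_n_m_fun_ext _ (fourier_energy (Derive_n f k))) by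
    (intros; now rewrite fourier_energy_Derive_n).
  apply bessel_inequality. now apply continuity_Derive_n.
Qed.

Lemma spectral_sum_lim k : (k < m)%nat -> is_lim_seq (spectral_sum f k) (Derive_n_energy f k).
Proof.
  intros Hk.
  apply (is_lim_seq_ext (fun N => sum_n_m (fourier_energy (Derive_n f k)) 1 N / PI)).
  - intros N. unfold spectral_sum. f_equal.
    apply sum_n_m_fun_ext. intros n. apply fourier_energy_Derive_n. lia.
  - apply (parseval_C1 _ (Derive_n f (S k))).
    + now apply is_derive_Derive_n.
    + now apply continuity_Derive_n.
    + apply Derive_n_periodic.
    + apply RInt_Derive_n. lia.
Qed.

Lemma RInt_Derive_n_sq_sub k : (k < m)%nat ->
  RInt (fun t => Derive_n f (S k) t ^ 2 - Derive_n f k t ^ 2) 0 (2 * PI) =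
  Derive_n_energy f (S k) - Derive_n_energy f k :> R.
Proof.
  intros Hk. pose proof (continuity_Derive_n (S k) Hk). pose proof (continuity_Derive_n k ltac:(lia)).
  apply RInt_minus_continuity; reg.
Qed.

(* Integrating by parts, the cross term [2 f^(k+1) f^(k-1)] contributes [-2 ||f^(k)||^2]. *)
Lemma RInt_Derive_n_sq_add k : (S (S k) <= m)%nat ->
  RInt (fun t => (Derive_n f (S (S k)) t + Derive_n f k t) ^ 2) 0 (2 * PI) =
  Derive_n_energy f (S (S k)) - 2 * Derive_n_energy f (S k) + Derive_n_energy f k :> R.
Proof.
  intros Hk.
  assert (C2 := continuity_Derive_n (S (S k)) Hk).
  assert (C1 := continuity_Derive_n (S k) ltac:(lia)).
  assert (C0 := continuity_Derive_n k ltac:(lia)).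
  rewrite (RInt_fun_ext _ (fun t => Derive_n f (S (S k)) t ^ 2
             + (2 * (Derive_n f (S (S k)) t * Derive_n f k t) + Derive_n f k t ^ 2))) by (intros; ring).
  rewrite !RInt_plus_continuity, RInt_scal_continuity by reg.
  rewrite (RInt_by_parts _ _ (Derive_n f (S k)) (Derive_n f (S (S k))) (Derive_n f k) (Derive_n f (S k)))
    by (assumption || (intros x; apply is_derive_Derive_n; lia)).
  rewrite !Derive_n_periodic. unfold Derive_n_energy.
  rewrite (RInt_fun_ext (fun t => Derive_n f (S k) t * Derive_n f (S k) t)
                        (fun t => Derive_n f (S k) t ^ 2))
    by (intros; ring).
  ring.
Qed.

Lemma high_energy_zero_of_trig_poly : trig_poly_1_m m f ->
  forall n, (m < n)%nat -> fourier_energy f n = 0.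
Proof.
  intros [a [b Hab]] n Hn.
  assert (Ecos : fourier_cos f n = fourier_cos (trig_sum a b m) n)
    by (apply RInt_fun_ext; intros; now rewrite Hab).
  assert (Esin : fourier_sin f n = fourier_sin (trig_sum a b m) n)
    by (apply RInt_fun_ext; intros; now rewrite Hab).
  unfold fourier_energy. rewrite Ecos, Esin, fourier_cos_trig_sum, fourier_sin_trig_sum.
  destruct (Nat.leb_spec n m); [lia |]. rewrite Bool.andb_false_r. simpl. ring.
Qed.

Lemma trig_poly_of_high_energy_zero : (forall n, (m < n)%nat -> fourier_energy f n = 0) ->
  trig_poly_1_m m f.
Proof.
  intros Hhigh. pose proof PI_RGT_0.
  exists (fun n => fourier_cos f n / PI), (fun n => fourier_sin f n / PI).
  apply (periodic_ext (2 * PI) f (fourier_sum f m)); auto; [lra | apply trig_sum_periodic |].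
  apply fourier_sum_eq_of_high_coef_zero; auto.
  - now apply continuity_Derive_n with (k := 0%nat); lia.
  - intros n Hn. now apply fourier_energy_eq0, Hhigh.
Qed.

Lemma spectral_sum_of_high_energy_zero k : (k <= m)%nat ->
  (forall n, (m < n)%nat -> fourier_energy f n = 0) -> Derive_n_energy f k = spectral_sum f k m.
Proof.
  intros Hk Hhigh. unfold Derive_n_energy, spectral_sum.
  rewrite parseval_of_high_coef_zero with (N := m).
  - f_equal. apply sum_n_m_fun_ext. intros n. now apply fourier_energy_Derive_n.
  - now apply continuity_Derive_n.
  - now apply RInt_Derive_n.
  - intros n Hn. apply fourier_energy_eq0. rewrite fourier_energy_Derive_n, Hhigh by assumption. ring.
Qed.

Section EnergyForm.
Variable q : nat -> R.

Lemma sum_coef_spectral_sum N :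
  sum_n_m (fun k => q k * spectral_sum f k N) 0 m =
  sum_n_m (fun n => sum_n_m (fun k => q k * (INR n ^ 2) ^ k) 0 m * fourier_energy f n) 1 N / PI :> R.
Proof.
  unfold spectral_sum, Rdiv.
  transitivity (sum_n_m (fun k => sum_n_m (fun n =>
                  q k * ((INR n ^ 2) ^ k * fourier_energy f n) * / PI) 1 N) 0 m).
  - apply sum_n_m_fun_ext. intros k.
    rewrite <- sum_n_m_Rmult_r, <- sum_n_m_Rmult_l. apply sum_n_m_fun_ext. intros; ring.
  - rewrite sum_n_m_swap, <- sum_n_m_Rmult_r. apply sum_n_m_fun_ext. intros n.
    rewrite <- !sum_n_m_Rmult_r. apply sum_n_m_fun_ext. intros; ring.
Qed.

(* The [k < m] part of [sum_k q_k (||f^(k)||^2 - spectral_sum f k N)]; the term [k = m] is only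
   known to be nonnegative, by Bessel's inequality. *)
Definition truncation_error (N : nat) : R :=
  sum_n_m (fun k => if k <? m then q k * (Derive_n_energy f k - spectral_sum f k N) else 0) 0 m.

Lemma truncation_error_lim : is_lim_seq truncation_error 0.
Proof.
  replace (Finite 0) with (Finite (sum_n_m (fun _ => 0) 0 m)).
  - apply is_lim_seq_sum_n_m. intros k Hk.
    destruct (Nat.ltb_spec k m) as [Hkm | _].
    + assert (Hlim := is_lim_seq_minus' _ _ _ _ (is_lim_seq_const (Derive_n_energy f k))
                        (spectral_sum_lim k Hkm)).
      apply (is_lim_seq_scal_l _ (q k)) in Hlim. simpl in Hlim.
      now rewrite Rminus_diag, Rmult_0_r in Hlim.
    + apply is_lim_seq_const.
  - now rewrite sum_n_m_R0.
Qed.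

Hypothesis q_top_nonneg : 0 <= q m.

Lemma energy_form_ge N :
  sum_n_m (fun k => q k * spectral_sum f k N) 0 m + truncation_error N <=
  sum_n_m (fun k => q k * Derive_n_energy f k) 0 m.
Proof.
  unfold truncation_error. rewrite <- sum_n_m_add.
  apply sum_n_m_le_loc. intros k Hk. destruct (Nat.ltb_spec k m).
  - lra.
  - replace k with m by lia. pose proof (spectral_sum_le_energy m N (le_n m)). nra.
Qed.

Hypothesis q_nonneg_sq : forall n, (1 <= n)%nat -> 0 <= sum_n_m (fun k => q k * (INR n ^ 2) ^ k) 0 m.

Lemma spectral_form_ge_term N n : (1 <= n <= N)%nat ->
  sum_n_m (fun k => q k * (INR n ^ 2) ^ k) 0 m * fourier_energy f n / PI <=
  sum_n_m (fun k => q k * spectral_sum f k N) 0 m.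
Proof.
  intros Hn. pose proof PI_RGT_0. rewrite sum_coef_spectral_sum.
  apply Rmult_le_compat_r; [left; now apply Rinv_0_lt_compat |].
  apply (sum_n_m_ge_term
           (fun j => sum_n_m (fun k => q k * (INR j ^ 2) ^ k) 0 m * fourier_energy f j)); auto.
  intros j Hj. apply Rmult_le_pos; [apply q_nonneg_sq; lia | apply fourier_energy_ge0].
Qed.

Lemma energy_form_nonneg : 0 <= sum_n_m (fun k => q k * Derive_n_energy f k) 0 m.
Proof.
  refine (is_lim_seq_le truncation_error (fun _ => _) 0 _ _ truncation_error_lim (is_lim_seq_const _)).
  intros N. pose proof (energy_form_ge N).
  assert (0 <= sum_n_m (fun k => q k * spectral_sum f k N) 0 m).
  { rewrite sum_coef_spectral_sum. apply Rmult_le_pos.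
    - apply sum_n_m_ge0. intros n Hn.
      apply Rmult_le_pos; [apply q_nonneg_sq; lia | apply fourier_energy_ge0].
    - left. apply Rinv_0_lt_compat, PI_RGT_0. }
  lra.
Qed.

Lemma energy_form_eq0_energy : sum_n_m (fun k => q k * Derive_n_energy f k) 0 m = 0 ->
  forall n, (1 <= n)%nat -> 0 < sum_n_m (fun k => q k * (INR n ^ 2) ^ k) 0 m ->
  fourier_energy f n = 0.
Proof.
  intros Hzero n Hn Hpos. pose proof PI_RGT_0. pose proof (fourier_energy_ge0 f n).
  set (c := sum_n_m (fun k => q k * (INR n ^ 2) ^ k) 0 m * fourier_energy f n / PI).
  assert (Hc : c <= 0).
  { refine (is_lim_seq_le_loc (fun _ => c) (fun N => - truncation_error N) c 0 _
              (is_lim_seq_const c) _).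
    - exists n. intros N HN. pose proof (energy_form_ge N).
      pose proof (spectral_form_ge_term N n ltac:(lia)).
      unfold c. lra.
    - replace (Finite 0) with (Rbar_opp 0) by (simpl; f_equal; ring).
      apply -> is_lim_seq_opp. apply truncation_error_lim. }
  assert (0 <= c) by (unfold c; apply Rmult_le_pos; [nra | left; now apply Rinv_0_lt_compat]).
  assert (Hc0 : c = 0) by lra. unfold c in Hc0.
  apply Rmult_integral in Hc0 as [Hc0 | Hc0].
  - apply Rmult_integral in Hc0 as [Hc0 | Hc0]; [lra | exact Hc0].
  - exfalso. revert Hc0. apply Rinv_neq_0_compat. lra.
Qed.

End EnergyForm.

Lemma energy_form_of_high_energy_zero (q : nat -> R) :
  (forall n, (m < n)%nat -> fourier_energy f n = 0) ->
  sum_n_m (fun k => q k * Derive_n_energy f k) 0 m =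
  sum_n_m (fun n => sum_n_m (fun k => q k * (INR n ^ 2) ^ k) 0 m * fourier_energy f n) 1 m / PI :> R.
Proof.
  intros Hhigh. rewrite <- sum_coef_spectral_sum.
  apply sum_n_m_fun_ext_loc. intros k Hk.
  now rewrite spectral_sum_of_high_energy_zero by (auto; lia).
Qed.

End SmoothPeriodic.

(** * The polynomials [Q_m], [P_m], [S_m] and the three quantities *)

(* The mathcomp imports are confined to this module; its statements use Stdlib's [R0], [R1],
   [Rmult], [Rminus] and [pow] so that [ring] and [lra] apply to them outside. *)
Module PolyCoefficients.
Import ssreflect ssrfun ssrbool eqtype ssrnat seq fintype bigop ssralg poly polydiv ssrnum Rstruct.
Import GRing.Theory Num.Theory.
Local Open Scope ring_scope.

Section Coefficients.
Variable m : nat.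

Lemma sum_n_m_bigop (F : nat -> R) n : sum_n_m F 0 n = \sum_(k < n.+1) F k.
Proof.
  elim: n => [|n IH]; first by rewrite sum_n_n big_ord1.
  have -> : sum_n_m F 0 n.+1 = plus (sum_n_m F 0 n) (F n.+1) by apply: sum_n_Sm; lia.
  by rewrite IH [RHS]big_ord_recr.
Qed.

Lemma size_Qpoly : size (Qpoly m) = m.+1.
Proof. by rewrite /Qpoly size_prod_XsubC size_iota subn1. Qed.

Lemma horner_Qpoly x : (Qpoly m).[x] = \prod_(1 <= j < m.+1) (x - (j * j)%:R).
Proof. by rewrite /Qpoly horner_prod; apply: eq_bigr => j _; rewrite hornerXsubC. Qed.

Lemma sum_cQ_pow x : sum_n_m (fun k => Rmult (cQ m k) (pow x k)) 0 m = (Qpoly m).[x].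
Proof.
  rewrite sum_n_m_bigop horner_coef size_Qpoly.
  by apply: eq_bigr => i _; rewrite /cQ RpowE.
Qed.

Lemma cQ_top : cQ m m = R1.
Proof.
  have := monic_prod_XsubC (index_iota 1 m.+1) xpredT (fun j : nat => ((j * j)%N%:R : R)).
  by rewrite -/(Qpoly m) => /monicP; rewrite lead_coefE size_Qpoly.
Qed.

Lemma pow_INR_sq n : pow (INR n) 2 = (n * n)%:R.
Proof. by rewrite RpowE INRE natrM expr2. Qed.

Lemma sum_cQ_root_sq n : (1 <= n)%coq_nat -> (n <= m)%coq_nat ->
  sum_n_m (fun k => Rmult (cQ m k) (pow (pow (INR n) 2) k)) 0 m = R0.
Proof.
  move=> /leP Hn1 /leP Hnm. rewrite sum_cQ_pow horner_Qpoly pow_INR_sq.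
  apply/eqP; rewrite prodf_seq_eq0; apply/hasP; exists n; last by rewrite subrr eqxx.
  by rewrite mem_index_iota Hn1 ltnS.
Qed.

Lemma sum_cQ_pos_sq n : (m < n)%coq_nat ->
  Rlt R0 (sum_n_m (fun k => Rmult (cQ m k) (pow (pow (INR n) 2) k)) 0 m).
Proof.
  move=> /ltP Hmn. rewrite sum_cQ_pow horner_Qpoly pow_INR_sq big_nat_cond.
  apply/RltP; apply: prodr_gt0 => j /andP [/andP [_ Hj] _].
  by rewrite subr_gt0 ltr_nat ltn_mul // (leq_ltn_trans _ Hmn) // -ltnS.
Qed.

Lemma XsubC1 : ('X - 1 : {poly R}) = 'X - (1 : R)%:P.
Proof. by rewrite polyC1. Qed.

Hypothesis m_ge1 : (1 <= m)%coq_nat.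

Lemma Qpoly_factor : Qpoly m = ('X - 1) * Ppoly m.
Proof. by rewrite /Qpoly big_ltn ?ltnS; [rewrite -XsubC1 | apply/leP]. Qed.

Lemma size_Ppoly : size (Ppoly m) = m.
Proof. by rewrite /Ppoly size_prod_XsubC size_iota subSS subn1 prednK //; apply/leP. Qed.

Lemma cQ_0 : cQ m 0 = Ropp (lam m 0).
Proof. by rewrite /cQ /lam Qpoly_factor mulrBl mul1r coefB coefXM sub0r. Qed.

Lemma cQ_S k : cQ m k.+1 = Rminus (lam m k) (lam m k.+1).
Proof. by rewrite /cQ /lam Qpoly_factor mulrBl mul1r coefB coefXM. Qed.

Lemma lam_top : lam m m = R0.
Proof. by rewrite /lam nth_default // size_Ppoly. Qed.

Lemma horner_Ppoly_1 : (Ppoly m).[1] = prod_1_minus_sq m.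
Proof. by rewrite /Ppoly horner_prod; apply: eq_bigr => j _; rewrite hornerXsubC. Qed.

Lemma Ppoly_decomp : Ppoly m = Spoly m * ('X - 1) + (prod_1_minus_sq m)%:P.
Proof.
  rewrite /Spoly divpK; first by rewrite -horner_Ppoly_1 subrK.
  by rewrite XsubC1 dvdp_XsubCl rootE !hornerE subrr.
Qed.

Lemma lam_0 : lam m 0 = Rminus (prod_1_minus_sq m) (Scoef m 1).
Proof.
  by rewrite /lam /Scoef Ppoly_decomp coefD mulrBr mulr1 coefB coefMX coefC sub0r addrC.
Qed.

Lemma lam_S k : lam m k.+1 = Rminus (Scoef m k.+1) (Scoef m k.+2).
Proof.
  by rewrite /lam /Scoef Ppoly_decomp coefD mulrBr mulr1 coefB coefMX coefC addr0.
Qed.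

Lemma Scoef_top : (2 <= m)%coq_nat -> Scoef m m = R0.
Proof.
  move=> /leP Hm. rewrite /Scoef nth_default //.
  rewrite /Spoly size_divp; last by rewrite XsubC1 monic_neq0 // monicXsubC.
  rewrite XsubC1 size_XsubC /= -subn1 leq_sub2r //.
  apply: leq_trans (size_polyD _ _) _. rewrite size_polyN size_Ppoly geq_max leqnn /=.
  by apply: leq_trans (size_polyC_leq1 _) _; apply: leq_trans Hm.
Qed.

End Coefficients.
End PolyCoefficients.

Section Quantities.
Variables (m : nat) (f : R -> R).
Hypothesis f_Cm : Cm m f.
Hypothesis f_periodic : forall t, f (t + 2 * PI) = f t.

Lemma quantA_energy : quantA m f = sum_n_m (fun k => cQ m k * Derive_n_energy f k) 0 m.
Proof. reflexivity. Qed.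

Lemma quantB_energy : (1 <= m)%nat ->
  quantB m f = sum_n_m (fun k => lam m k * (Derive_n_energy f (S k) - Derive_n_energy f k)) 0 (m - 1).
Proof.
  intros Hm. apply sum_n_m_fun_ext_loc. intros k Hk.
  now rewrite (RInt_Derive_n_sq_sub m f f_Cm) by lia.
Qed.

Lemma quantB_eq_quantA : (1 <= m)%nat -> quantB m f = quantA m f.
Proof.
  intros Hm. rewrite quantB_energy, quantA_energy by exact Hm.
  rewrite (sum_n_m_abel (cQ m) (lam m) (Derive_n_energy f) m Hm
             (PolyCoefficients.cQ_0 m Hm) (PolyCoefficients.cQ_S m Hm)).
  rewrite PolyCoefficients.lam_top by exact Hm. now rewrite Rmult_0_l, Rminus_0_r.
Qed.

Lemma quantC_eq_quantA : (2 <= m)%nat -> quantC m f = quantA m f.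
Proof.
  intros Hm. rewrite <- quantB_eq_quantA, quantB_energy by lia. unfold quantC.
  set (J := fun j => Derive_n_energy f (S j) - Derive_n_energy f j).
  rewrite (sum_n_m_abel_1 (lam m) (Scoef m) J (prod_1_minus_sq m))
    by (auto using PolyCoefficients.lam_0, PolyCoefficients.lam_S with arith).
  replace (S (m - 1)) with m by lia. rewrite PolyCoefficients.Scoef_top by lia.
  replace (RInt (fun t => Derive f t ^ 2 - f t ^ 2) 0 (2 * PI)) with (J 0%nat)
    by (symmetry; apply (RInt_Derive_n_sq_sub m f f_Cm 0); lia).
  rewrite Rmult_0_l, Rminus_0_r. f_equal.
  apply sum_n_m_fun_ext_loc. intros [| j] Hj; [lia |]. f_equal.
  replace (S j - 1)%nat with j by lia.
  replace (ssrnat.subn (S j) 1) with j by (symmetry; apply Nat.sub_0_r).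
  rewrite (RInt_Derive_n_sq_add m f f_Cm f_periodic j) by lia.
  unfold J. lra.
Qed.

Hypothesis f_mean : RInt f 0 (2 * PI) = 0.

Lemma sum_cQ_nonneg_sq n : (1 <= n)%nat -> 0 <= sum_n_m (fun k => cQ m k * (INR n ^ 2) ^ k) 0 m.
Proof.
  intros Hn. destruct (le_lt_dec n m) as [Hnm | Hmn].
  - rewrite PolyCoefficients.sum_cQ_root_sq by assumption. lra.
  - left. now apply PolyCoefficients.sum_cQ_pos_sq.
Qed.

Lemma quantA_nonneg : 0 <= quantA m f.
Proof.
  rewrite quantA_energy. apply energy_form_nonneg; auto.
  - rewrite PolyCoefficients.cQ_top. lra.
  - exact sum_cQ_nonneg_sq.
Qed.

Lemma quantA_eq0_iff : quantA m f = 0 <-> trig_poly_1_m m f.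
Proof.
  rewrite quantA_energy. split.
  - intros Hzero. apply trig_poly_of_high_energy_zero; auto.
    intros n Hn. apply (energy_form_eq0_energy m f f_Cm f_periodic f_mean (cQ m)); auto.
    + rewrite PolyCoefficients.cQ_top. lra.
    + exact sum_cQ_nonneg_sq.
    + lia.
    + now apply PolyCoefficients.sum_cQ_pos_sq.
  - intros Htrig.
    rewrite (energy_form_of_high_energy_zero m f f_Cm f_periodic f_mean)
      by now apply high_energy_zero_of_trig_poly.
    rewrite (sum_n_m_fun_ext_loc _ (fun _ => 0)), sum_n_m_R0; [unfold Rdiv; ring |].
    intros n Hn. rewrite PolyCoefficients.sum_cQ_root_sq by lia. ring.
Qed.

End Quantities.

Theorem proposition2p1 (m : nat) (f : R -> R)
  (Hf : Cm m f)
  (Hper : forall t, f (t + 2 * PI) = f t)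
  (Hmean : RInt f 0 (2 * PI) = 0) :
  (* (a) *)
  (0 <= quantA m f /\ (quantA m f = 0 <-> trig_poly_1_m m f)) /\
  (* (b), meaningful for m >= 1 (P_m is defined only for m >= 1) *)
  ((1 <= m)%nat -> 0 <= quantB m f /\ (quantB m f = 0 <-> trig_poly_1_m m f)) /\
  (* (c) *)
  ((2 <= m)%nat -> 0 <= quantC m f /\ (quantC m f = 0 <-> trig_poly_1_m m f)) /\
  (* equivalence of the inequalities *)
  ((1 <= m)%nat -> (0 <= quantA m f <-> 0 <= quantB m f)) /\
  ((2 <= m)%nat -> (0 <= quantA m f <-> 0 <= quantC m f)).
Proof.
  pose proof (quantA_nonneg m f Hf Hper Hmean) as HA.
  pose proof (quantA_eq0_iff m f Hf Hper Hmean) as HA0.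
  split; [auto |].
  split; [intros Hm; rewrite (quantB_eq_quantA m f Hf Hm); auto |].
  split; [intros Hm; rewrite (quantC_eq_quantA m f Hf Hper Hm); auto |].
  split; intros Hm.
  - rewrite (quantB_eq_quantA m f Hf Hm). tauto.
  - rewrite (quantC_eq_quantA m f Hf Hper Hm). tauto.
Qed.
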